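(* Let $K\subset\mathbb{R}^2$ be the Sierpinski gasket, equipped with its geodesic metric $d_{geo}$ (for which it is a compact length space), and let $R_j$, $j\in\mathbb{N}$, be an enumeration, in non-increasing order of length, of all cell edges $F_w([p_a,p_b])$, $w\in W_*$, $1\le a<b\le 3$. Then $K$ satisfies Axioms 1 and 2 with respect to these curves.
   Context: Let $p_1,p_2,p_3$ be the vertices of an equilateral triangle in $\mathbb{R}^2$ and $F_i(x)=\frac12(x-p_i)+p_i$, $i=1,2,3$. The Sierpinski gasket $K$ is the unique nonempty compact set with $K=\bigcup_{i=1}^3F_i(K)$. $W_*$ is the set of finite words $w=w_1\cdots w_m$ ($m\ge0$) over $\{1,2,3\}$ and $F_w=F_{w_1}\circ\cdots\circ F_{w_m}$ ($F_\emptyset=\mathrm{id}$). $[p_a,p_b]$ is the straight segment. $d_{geo}(p,q)$ is the infimum of Euclidean lengths of curves in $K$ joining $p$ and $q$. Each edge is regarded as a curve parametrized by Euclidean arclength. For a compact set $X\subset\mathbb{R}^n$ with geodesic metric $d_{geo}$ (defined likewise) and curves $R_j$: Axiom 1: each $R_j$ is the image of an injective $C^1$ map $r_j:[0,\alpha_j]\to X$ parametrized by arclength ($\alpha_j=L(R_j)<\infty$), $X=\overline{\bigcup_jR_j}$, and $\alpha_j\to0$. Axiom 2: there is a dense set $\mathcal{B}\subset X$ such that for each $p\in\mathcal{B}$ and $q\in X$, some minimizing geodesic (curve of length $d_{geo}(p,q)$) from $p$ to $q$ is a finite or countable concatenation of the $R_j$: there are points $p=p_1,p_2,\dots$ along it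 (finitely many ending at $q$, or infinitely many converging to $q$) such that consecutive $p_k,p_{k+1}$ are the two endpoints of some $R_{j_k}$, traversed by the geodesic between them. *)

From Stdlib Require Import Reals List Lra.
Open Scope R_scope.

Inductive idx : Type := i1 | i2 | i3.

Definition idx_lt (a b : idx) : Prop :=
  match a, b with
  | i1, i2 | i1, i3 | i2, i3 => True
  | _, _ => False
  end.

Definition pt : Type := (R * R)%type.

Definition edist (x y : pt) : R :=
  sqrt ((fst x - fst y) ^ 2 + (snd x - snd y) ^ 2).

Definition set_eq (A B : pt -> Prop) : Prop := forall x, A x <-> B x.

Definition equilateral (P : idx -> pt) : Prop :=
  P i1 <> P i2 /\
  edist (P i1) (P i2) = edist (P i2) (P i3) /\
  edist (P i2) (P i3) = edist (P i1) (P i3).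

Definition Fmap (P : idx -> pt) (i : idx) (x : pt) : pt :=
  (/ 2 * (fst x - fst (P i)) + fst (P i), / 2 * (snd x - snd (P i)) + snd (P i)).

Fixpoint Fw (P : idx -> pt) (w : list idx) (x : pt) : pt :=
  match w with
  | nil => x
  | i :: w' => Fmap P i (Fw P w' x)
  end.

Definition cell_edge (P : idx -> pt) (w : list idx) (a b : idx) : pt -> Prop :=
  fun x => exists s, 0 <= s <= 1 /\
    x = Fw P w ((1 - s) * fst (P a) + s * fst (P b), (1 - s) * snd (P a) + s * snd (P b)).

Definition edge_length (P : idx -> pt) (w : list idx) (a b : idx) : R :=
  edist (Fw P w (P a)) (Fw P w (P b)).

Definition is_open (U : pt -> Prop) : Prop :=
  forall x, U x -> exists e, 0 < e /\ forall y, edist x y < e -> U y.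

Definition compact_set (K : pt -> Prop) : Prop :=
  forall (I : Type) (U : I -> pt -> Prop),
    (forall i, is_open (U i)) ->
    (forall x, K x -> exists i, U i x) ->
    exists l : list I, forall x, K x -> exists i, In i l /\ U i x.

Definition closure (A : pt -> Prop) (x : pt) : Prop :=
  forall e, 0 < e -> exists y, A y /\ edist x y < e.

Definition self_similar (P : idx -> pt) (K : pt -> Prop) : Prop :=
  forall x, K x <-> exists i y, K y /\ x = Fmap P i y.

Definition is_curve (X : pt -> Prop) (g : R -> pt) (a b : R) (p q : pt) : Prop :=
  a <= b /\ g a = p /\ g b = q /\
  (forall t, a <= t <= b -> X (g t)) /\
  (forall t, a <= t <= b -> forall e, 0 < e -> exists d, 0 < d /\
     forall s, a <= s <= b -> Rabs (s - t) < d -> edist (g s) (g t) < e).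

Fixpoint psum (f : nat -> R) (n : nat) : R :=
  match n with
  | O => 0
  | S n' => psum f n' + f n'
  end.

Definition polygon_lengths (g : R -> pt) (a b : R) : R -> Prop :=
  fun v => exists (N : nat) (s : nat -> R),
    s O = a /\ s N = b /\ (forall k, (k < N)%nat -> s k <= s (S k)) /\
    v = psum (fun k => edist (g (s k)) (g (s (S k)))) N.

Definition is_length (g : R -> pt) (a b l : R) : Prop :=
  is_lub (polygon_lengths g a b) l.

(** A minimizing geodesic in X from p to q: a curve whose length is d_geo(p,q),
    the infimum of the lengths of curves in X joining p and q. *)
Definition min_geodesic (X : pt -> Prop) (g : R -> pt) (a b : R) (p q : pt) : Prop :=
  is_curve X g a b p q /\
  exists l, is_length g a b l /\
    forall (g' : R -> pt) (a' b' l' : R),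
      is_curve X g' a' b' p q -> is_length g' a' b' l' -> l <= l'.

Definition deriv_within (a b : R) (f f' : R -> R) : Prop :=
  forall t, a <= t <= b -> forall e, 0 < e -> exists d, 0 < d /\
    forall s, a <= s <= b -> s <> t -> Rabs (s - t) < d ->
      Rabs ((f s - f t) / (s - t) - f' t) < e.

Definition cont_within (a b : R) (f : R -> R) : Prop :=
  forall t, a <= t <= b -> forall e, 0 < e -> exists d, 0 < d /\
    forall s, a <= s <= b -> Rabs (s - t) < d -> Rabs (f s - f t) < e.

Definition C1_arclength (r : R -> pt) (al : R) : Prop :=
  exists d1 d2 : R -> R,
    deriv_within 0 al (fun t => fst (r t)) d1 /\
    deriv_within 0 al (fun t => snd (r t)) d2 /\
    cont_within 0 al d1 /\ cont_within 0 al d2 /\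
    forall t, 0 <= t <= al -> d1 t ^ 2 + d2 t ^ 2 = 1.

Definition inj_on (r : R -> pt) (al : R) : Prop :=
  forall s t, 0 <= s <= al -> 0 <= t <= al -> r s = r t -> s = t.

Definition image_on (r : R -> pt) (a b : R) : pt -> Prop :=
  fun x => exists t, a <= t <= b /\ r t = x.

Definition Axiom1 (X : pt -> Prop) (Rc : nat -> pt -> Prop)
    (alpha : nat -> R) (r : nat -> R -> pt) : Prop :=
  (forall j,
     inj_on (r j) (alpha j) /\
     C1_arclength (r j) (alpha j) /\
     set_eq (Rc j) (image_on (r j) 0 (alpha j)) /\
     (forall t, 0 <= t <= alpha j -> X (r j t)) /\
     is_length (r j) 0 (alpha j) (alpha j)) /\
  set_eq X (closure (fun x => exists j, Rc j x)) /\
  Un_cv alpha 0.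

Definition traverses (Rc : nat -> pt -> Prop) (alpha : nat -> R) (r : nat -> R -> pt)
    (g : R -> pt) (s u : R) (j : nat) : Prop :=
  set_eq (Rc j) (image_on g s u) /\
  ((g s = r j 0 /\ g u = r j (alpha j)) \/ (g s = r j (alpha j) /\ g u = r j 0)).

(** g on [a,b] is a finite or countable concatenation of the curves Rc j,
    with points p_k = g (t k), p_1 = g a, ending at / converging to q. *)
Definition concat_of_curves (Rc : nat -> pt -> Prop) (alpha : nat -> R)
    (r : nat -> R -> pt) (g : R -> pt) (a b : R) (q : pt) : Prop :=
  (exists (N : nat) (t : nat -> R) (js : nat -> nat),
     t O = a /\ t N = b /\ g b = q /\
     forall k, (k < N)%nat -> t k < t (S k) /\ traverses Rc alpha r g (t k) (t (S k)) (js k))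
  \/
  (exists (t : nat -> R) (js : nat -> nat),
     t O = a /\
     (forall k, t k < t (S k) <= b /\ traverses Rc alpha r g (t k) (t (S k)) (js k)) /\
     (forall e, 0 < e -> exists M, forall k, (M <= k)%nat -> edist (g (t k)) q < e)).

Definition Axiom2 (X : pt -> Prop) (Rc : nat -> pt -> Prop)
    (alpha : nat -> R) (r : nat -> R -> pt) : Prop :=
  exists B : pt -> Prop,
    (forall x, B x -> X x) /\
    (forall x, X x -> closure B x) /\
    forall p q, B p -> X q ->
      exists (g : R -> pt) (a b : R),
        min_geodesic X g a b p q /\ concat_of_curves Rc alpha r g a b q.

From Stdlib Require Import Reals List.
From Stdlib Require Import Lra Lia Psatz Classical ClassicalEpsilon.
Open Scope R_scope.

(* The gasket lies in the triangle (its barycentric coordinates are nonnegative) and cell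
   edges are segments, so Axiom 1 is elementary. For Axiom 2 take for B the cell vertices.
   For a vertex p of level m let phi(x) be the minimum, over the corners c_k of the level-m
   cell of x, of 2^-m side dist_m(p, c_k) + side (bary_k c_k - bary_k x), dist_m being the
   distance in the level-m graph. Walking in that graph to the best corner and then
   descending towards x along edges of the nested cells of x gives a polygon of cell edges
   of length phi(x). Conversely every curve in K from p to x is at least phi(x) long: phi
   varies by at most one side length between adjacent corners of small cells, and the
   minimum of cones of slope 1/(1 - 2 delta) over the corners of the cells of level n is
   locally Lipschitz with that constant, because two cells of level n coincide, meet at one
   corner, or are far apart. *)

Lemma edist_ge0 x y : 0 <= edist x y.
Proof. apply sqrt_pos. Qed.

Lemma edist_sym x y : edist x y = edist y x.
Proof. unfold edist. f_equal. ring. Qed.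

Lemma edist_xx x : edist x x = 0.
Proof.
  unfold edist. replace ((fst x - fst x) ^ 2 + (snd x - snd x) ^ 2) with 0 by ring.
  apply sqrt_0.
Qed.

Lemma edist_eq0 x y : edist x y = 0 -> x = y.
Proof.
  destruct x as [a b], y as [c d]. unfold edist; cbn [fst snd]. intros H.
  pose proof (pow2_ge_0 (a - c)). pose proof (pow2_ge_0 (b - d)).
  apply sqrt_eq_0 in H; [|lra].
  assert (a = c) by nra. assert (b = d) by nra. subst. reflexivity.
Qed.

Lemma edist_triangle x y z : edist x z <= edist x y + edist y z.
Proof.
  destruct x as [a b], y as [c d], z as [e f]. unfold edist; cbn [fst snd].
  pose proof (Rgeom.triangle a b e f c d) as H. unfold Rgeom.dist_euc, Rsqr in H.
  replace ((a - e) ^ 2 + (b - f) ^ 2) with ((a - e) * (a - e) + (b - f) * (b - f)) by ring.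
  replace ((a - c) ^ 2 + (b - d) ^ 2) with ((a - c) * (a - c) + (b - d) * (b - d)) by ring.
  replace ((c - e) ^ 2 + (d - f) ^ 2) with ((c - e) * (c - e) + (d - f) * (d - f)) by ring.
  exact H.
Qed.

Lemma edist_reverse_triangle x y z : Rabs (edist x z - edist y z) <= edist x y.
Proof.
  pose proof (edist_triangle x y z). pose proof (edist_triangle y x z).
  rewrite (edist_sym y x) in *. split_Rabs; lra.
Qed.

Lemma Rabs_fst_le_edist u v : Rabs (fst u - fst v) <= edist u v.
Proof.
  unfold edist. rewrite <- (sqrt_pow2 (Rabs (fst u - fst v))) by apply Rabs_pos.
  apply sqrt_le_1_alt. rewrite <- (pow2_abs (fst u - fst v)).
  pose proof (pow2_ge_0 (snd u - snd v)). lra.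
Qed.

Lemma Rabs_snd_le_edist u v : Rabs (snd u - snd v) <= edist u v.
Proof.
  unfold edist. rewrite <- (sqrt_pow2 (Rabs (snd u - snd v))) by apply Rabs_pos.
  apply sqrt_le_1_alt. rewrite <- (pow2_abs (snd u - snd v)).
  pose proof (pow2_ge_0 (fst u - fst v)). lra.
Qed.

Lemma edist_le_Rabs_sum u v : edist u v <= Rabs (fst u - fst v) + Rabs (snd u - snd v).
Proof.
  unfold edist. pose proof (Rabs_pos (fst u - fst v)). pose proof (Rabs_pos (snd u - snd v)).
  rewrite <- (sqrt_pow2 (Rabs (fst u - fst v) + Rabs (snd u - snd v))) by lra.
  apply sqrt_le_1_alt. rewrite <- (pow2_abs (fst u - fst v)), <- (pow2_abs (snd u - snd v)). nra.
Qed.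

Definition seg (x y : pt) (t : R) : pt := ((1 - t) * fst x + t * fst y, (1 - t) * snd x + t * snd y).

Definition segment (x y : pt) : pt -> Prop := fun z => exists u, 0 <= u <= 1 /\ z = seg x y u.

Lemma seg0 x y : seg x y 0 = x.
Proof. destruct x; unfold seg; simpl; f_equal; ring. Qed.

Lemma seg1 x y : seg x y 1 = y.
Proof. destruct y; unfold seg; simpl; f_equal; ring. Qed.

Lemma seg_sym x y t : seg x y t = seg y x (1 - t).
Proof. unfold seg; f_equal; ring. Qed.

Lemma seg_seg x y u1 u2 v : seg (seg x y u1) (seg x y u2) v = seg x y ((1 - v) * u1 + v * u2).
Proof. unfold seg; simpl; f_equal; ring. Qed.

Lemma edist_seg x y u v : edist (seg x y u) (seg x y v) = Rabs (u - v) * edist x y.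
Proof.
  unfold edist, seg; cbn [fst snd].
  replace (((1 - u) * fst x + u * fst y - ((1 - v) * fst x + v * fst y)) ^ 2 +
           ((1 - u) * snd x + u * snd y - ((1 - v) * snd x + v * snd y)) ^ 2)
    with ((u - v) ^ 2 * ((fst x - fst y) ^ 2 + (snd x - snd y) ^ 2)) by ring.
  rewrite sqrt_mult_alt, <- pow2_abs, sqrt_pow2 by (apply pow2_ge_0 || apply Rabs_pos). reflexivity.
Qed.

Lemma edist_seg_l x y t : edist (seg x y t) x = Rabs t * edist x y.
Proof. rewrite <- (seg0 x y) at 2. rewrite edist_seg, Rminus_0_r. reflexivity. Qed.

Lemma seg_inj x y u v : x <> y -> seg x y u = seg x y v -> u = v.
Proof.
  intros Hxy E. assert (Hd : edist (seg x y u) (seg x y v) = 0) by (rewrite E; apply edist_xx).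
  rewrite edist_seg in Hd. assert (0 < edist x y).
  { destruct (edist_ge0 x y) as [|H0]; auto. exfalso. apply Hxy, edist_eq0; auto. }
  assert (Rabs (u - v) = 0) by (apply Rmult_eq_reg_r with (edist x y); lra).
  revert H0. split_Rabs; lra.
Qed.

Lemma segment_sym x y z : segment x y z <-> segment y x z.
Proof.
  unfold segment; split; intros [u [Hu ->]]; exists (1 - u); split; try lra;
    rewrite seg_sym; f_equal; ring.
Qed.

Lemma segment_endpoints A B C D : A <> B -> set_eq (segment A B) (segment C D) ->
  (A = C /\ B = D) \/ (A = D /\ B = C).
Proof.
  intros HAB E.
  destruct (proj2 (E C)) as [u1 [Hu1 EC]]. { exists 0; split; [lra|]. symmetry; apply seg0. }
  destruct (proj2 (E D)) as [u2 [Hu2 ED]]. { exists 1; split; [lra|]. symmetry; apply seg1. }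
  destruct (proj1 (E A)) as [v1 [Hv1 EA]]. { exists 0; split; [lra|]. symmetry; apply seg0. }
  destruct (proj1 (E B)) as [v2 [Hv2 EB]]. { exists 1; split; [lra|]. symmetry; apply seg1. }
  rewrite EC, ED, seg_seg in EA, EB.
  rewrite <- (seg0 A B) in EA at 1. rewrite <- (seg1 A B) in EB at 1.
  apply seg_inj in EA; auto. apply seg_inj in EB; auto.
  assert (u1 = 0 /\ u2 = 1 \/ u1 = 1 /\ u2 = 0) as [[-> ->]|[-> ->]] by nra;
    rewrite ?seg0, ?seg1 in *; auto.
Qed.

Lemma psum_telescope (s : nat -> R) N : psum (fun k => s (S k) - s k) N = s N - s O.
Proof. induction N; simpl; [ring|]. rewrite IHN. ring. Qed.

Lemma psum_le (f g : nat -> R) N : (forall k, (k < N)%nat -> f k <= g k) -> psum f N <= psum g N.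
Proof.
  induction N; simpl; intros H; [lra|].
  pose proof (H N (Nat.lt_succ_diag_r N)). assert (psum f N <= psum g N) by (apply IHN; auto). lra.
Qed.

Lemma psum_ext (f g : nat -> R) N : (forall k, (k < N)%nat -> f k = g k) -> psum f N = psum g N.
Proof. induction N; simpl; intros H; auto. rewrite IHN, H by auto. reflexivity. Qed.

Lemma psum_scal c (f : nat -> R) N : psum (fun k => c * f k) N = c * psum f N.
Proof. induction N; simpl; [ring|]. rewrite IHN. ring. Qed.

Lemma partition_range (s : nat -> R) a b N :
  s O = a -> s N = b -> (forall k, (k < N)%nat -> s k <= s (S k)) ->
  forall k, (k <= N)%nat -> a <= s k <= b.
Proof.
  intros H0 HN Hm.
  assert (Hmono : forall j k, (j <= k <= N)%nat -> s j <= s k).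
  { intros j k [Hjk HkN]. induction Hjk; [lra|].
    pose proof (Hm m ltac:(lia)). pose proof (IHHjk ltac:(lia)). lra. }
  intros k Hk. rewrite <- H0, <- HN. split; apply Hmono; lia.
Qed.

Lemma two_point_polygon (g : R -> pt) a b : a <= b ->
  polygon_lengths g a b (edist (g a) (g b)).
Proof.
  intros Hab. exists 1%nat, (fun k => match k with O => a | _ => b end).
  split; [auto|]. split; [auto|]. split; [intros [|k] Hk; [lra|lia]|]. simpl. ring.
Qed.

Lemma is_length_ge0 g a b l : a <= b -> is_length g a b l -> 0 <= l.
Proof.
  intros Hab [Hub _]. apply Rle_trans with (edist (g a) (g b)); [apply edist_ge0|].
  apply Hub, two_point_polygon; auto.
Qed.

Lemma polygon_length_le_of_lipschitz (g : R -> pt) a b v :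
  (forall s t, a <= s <= b -> a <= t <= b -> edist (g s) (g t) <= Rabs (s - t)) ->
  polygon_lengths g a b v -> v <= b - a.
Proof.
  intros Hg [N [s [H0 [HN [Hm ->]]]]]. rewrite <- H0, <- HN, <- psum_telescope.
  apply psum_le. intros k Hk. pose proof (partition_range s a b N H0 HN Hm k ltac:(lia)).
  pose proof (partition_range s a b N H0 HN Hm (S k) ltac:(lia)). specialize (Hm k Hk).
  rewrite <- (Rabs_pos_eq (s (S k) - s k)) by lra. rewrite Rabs_minus_sym. apply Hg; lra.
Qed.

Lemma isometric_length (g : R -> pt) a b : a <= b ->
  (forall s t, edist (g s) (g t) = Rabs (s - t)) -> is_length g a b (b - a).
Proof.
  intros Hab Hg. split.
  - intros v. apply polygon_length_le_of_lipschitz. intros s t _ _. rewrite Hg; lra.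
  - intros u Hu. apply Hu. replace (b - a) with (edist (g a) (g b)).
    + apply two_point_polygon; auto.
    + rewrite Hg, Rabs_left1 by lra. ring.
Qed.

Definition clamp a b t := Rmax a (Rmin b t).

Lemma clamp_in a b t : a <= b -> a <= clamp a b t <= b.
Proof. intros. unfold clamp, Rmax, Rmin. repeat destruct (Rle_dec _ _); lra. Qed.

Lemma clamp_id a b t : a <= t <= b -> clamp a b t = t.
Proof. intros. unfold clamp, Rmax, Rmin. repeat destruct (Rle_dec _ _); lra. Qed.

Lemma Rabs_clamp_le a b s t : a <= b -> a <= t <= b -> Rabs (clamp a b s - t) <= Rabs (s - t).
Proof. intros. unfold clamp, Rmax, Rmin. repeat destruct (Rle_dec _ _); split_Rabs; lra. Qed.

(* Heine's theorem, applied to both coordinates of [g] extended constantly outside [a, b]. *)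
Lemma curve_unif_cont (g : R -> pt) a b : a <= b ->
  (forall t, a <= t <= b -> forall e, 0 < e -> exists d, 0 < d /\
     forall s, a <= s <= b -> Rabs (s - t) < d -> edist (g s) (g t) < e) ->
  forall e, 0 < e -> exists d, 0 < d /\
    forall s t, a <= s <= b -> a <= t <= b -> Rabs (s - t) < d -> edist (g s) (g t) < e.
Proof.
  intros Hab Hc e He.
  assert (Hcp : forall pr : pt -> R, (forall u v, Rabs (pr u - pr v) <= edist u v) ->
            forall x, a <= x <= b -> continuity_pt (fun t => pr (g (clamp a b t))) x).
  { intros pr Hpr x Hx eps Heps. destruct (Hc x Hx eps Heps) as [d [Hd Hd']].
    exists d. split; [lra|]. intros y [_ Hy]. simpl in *. unfold Rdist in *.
    rewrite (clamp_id a b x Hx). eapply Rle_lt_trans; [apply Hpr|].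
    apply Hd'; [apply clamp_in; auto|]. pose proof (Rabs_clamp_le a b y x Hab Hx). lra. }
  destruct (Heine _ _ (compact_P3 a b) (Hcp fst Rabs_fst_le_edist) (mkposreal (e/2) ltac:(lra))) as [d1 Hd1].
  destruct (Heine _ _ (compact_P3 a b) (Hcp snd Rabs_snd_le_edist) (mkposreal (e/2) ltac:(lra))) as [d2 Hd2].
  exists (Rmin d1 d2). split; [apply Rmin_pos; apply cond_pos|].
  intros s t Hs Ht Hst. specialize (Hd1 s t Hs Ht). specialize (Hd2 s t Hs Ht). simpl in *.
  rewrite !clamp_id in Hd1, Hd2 by auto. pose proof (Rmin_l d1 d2). pose proof (Rmin_r d1 d2).
  pose proof (Hd1 ltac:(lra)). pose proof (Hd2 ltac:(lra)). pose proof (edist_le_Rabs_sum (g s) (g t)). lra.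
Qed.

(* Sum over a uniform partition fine enough for uniform continuity. *)
Lemma increment_le_length (X : pt -> Prop) (f : pt -> R) c eps g a b x y l :
  0 <= c -> 0 < eps ->
  (forall z z', X z -> X z' -> edist z z' < eps -> Rabs (f z - f z') <= c * edist z z') ->
  is_curve X g a b x y -> is_length g a b l -> f y - f x <= c * l.
Proof.
  intros Hc Heps Hlip [Hab [Hga [Hgb [HgX Hgc]]]] Hl.
  destruct (curve_unif_cont g a b Hab Hgc eps Heps) as [d0 [Hd0 Hunif]].
  destruct (INR_archimed d0 (b - a) Hd0) as [M0 HM0]. set (M := S M0).
  assert (HMpos : 0 < INR M) by (apply lt_0_INR; unfold M; lia).
  set (dt := (b - a) / INR M).
  assert (Hdt : 0 <= dt < d0).
  { unfold dt, M. rewrite S_INR. pose proof (pos_INR M0). split.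
    - apply Rmult_le_pos; [lra|left; apply Rinv_0_lt_compat; lra].
    - apply Rmult_lt_reg_r with (INR M0 + 1); [lra|]. field_simplify; nra. }
  set (s := fun k => a + INR k * dt).
  assert (Hs0 : s O = a) by (unfold s; simpl; ring).
  assert (HsM : s M = b) by (unfold s, dt; field; lra).
  assert (Hstep : forall k, s (S k) - s k = dt) by (intros; unfold s; rewrite S_INR; ring).
  assert (Hmono : forall k, (k < M)%nat -> s k <= s (S k)) by (intros k _; pose proof (Hstep k); lra).
  assert (Hrange : forall k, (k <= M)%nat -> a <= s k <= b) by (apply partition_range; auto).
  assert (Hpoly : psum (fun k => edist (g (s k)) (g (s (S k)))) M <= l) by (apply (proj1 Hl); exists M, s; auto).
  assert (Hsum : f y - f x <= c * psum (fun k => edist (g (s k)) (g (s (S k)))) M).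
  { rewrite <- Hga, <- Hgb, <- Hs0, <- HsM, <- (psum_telescope (fun k => f (g (s k))) M), <- psum_scal.
    apply psum_le. intros k Hk. pose proof (Hrange k ltac:(lia)). pose proof (Hrange (S k) ltac:(lia)).
    assert (Hlt : edist (g (s (S k))) (g (s k)) < eps) by (apply Hunif; auto; rewrite Hstep, Rabs_pos_eq; lra).
    specialize (Hlip _ _ (HgX (s (S k)) ltac:(lra)) (HgX (s k) ltac:(lra)) Hlt). rewrite edist_sym in Hlip.
    revert Hlip. split_Rabs; lra. }
  apply Rle_trans with (1 := Hsum). apply Rmult_le_compat_l; auto.
Qed.

Definition arc (x y : pt) (t : R) : pt := seg x y (t / edist x y).

Section Arc.

Variables x y : pt.
Hypothesis Hxy : x <> y.

Let edist_xy_pos : 0 < edist x y.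
Proof. destruct (edist_ge0 x y) as [|E]; auto. exfalso. apply Hxy, edist_eq0. auto. Qed.

Lemma edist_arc s t : edist (arc x y s) (arc x y t) = Rabs (s - t).
Proof.
  unfold arc. rewrite edist_seg. replace (s / edist x y - t / edist x y) with ((s - t) / edist x y) by (field; lra).
  unfold Rdiv. rewrite Rabs_mult, Rabs_inv, (Rabs_pos_eq (edist x y)) by lra. field. lra.
Qed.

Lemma arc_start : arc x y 0 = x.
Proof. unfold arc, Rdiv. rewrite Rmult_0_l. apply seg0. Qed.

Lemma arc_end : arc x y (edist x y) = y.
Proof. unfold arc. rewrite Rdiv_diag by lra. apply seg1. Qed.

Lemma edist_arc_start t : 0 <= t -> edist (arc x y t) x = t.
Proof. intros Ht. rewrite <- arc_start at 2. rewrite edist_arc, Rminus_0_r, Rabs_pos_eq; lra. Qed.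

Lemma edist_arc_end t : t <= edist x y -> edist (arc x y t) y = edist x y - t.
Proof. intros Ht. rewrite <- arc_end at 2. rewrite edist_arc, Rabs_left1; lra. Qed.

Lemma arc_inj : inj_on (arc x y) (edist x y).
Proof. intros s t _ _ E. pose proof (edist_arc s t) as D. rewrite E, edist_xx in D. revert D. split_Rabs; lra. Qed.

Lemma arc_length : is_length (arc x y) 0 (edist x y) (edist x y).
Proof. replace (edist x y) with (edist x y - 0) at 2 by ring. apply isometric_length; [lra|apply edist_arc]. Qed.

Lemma arc_image : set_eq (segment x y) (image_on (arc x y) 0 (edist x y)).
Proof.
  intros z. unfold arc. split.
  - intros [u [Hu ->]]. exists (u * edist x y). split; [nra|]. f_equal. field. lra.
  - intros [t [Ht <-]]. exists (t / edist x y). split; auto. split.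
    + apply Rmult_le_pos; [lra|left; apply Rinv_0_lt_compat; lra].
    + apply Rmult_le_reg_r with (edist x y); auto. unfold Rdiv. rewrite Rmult_assoc, Rinv_l; lra.
Qed.

Lemma arc_C1 : C1_arclength (arc x y) (edist x y).
Proof.
  set (l := edist x y) in *.
  assert (Hl2 : l ^ 2 = (fst x - fst y) ^ 2 + (snd x - snd y) ^ 2).
  { unfold l, edist. apply pow2_sqrt. pose proof (pow2_ge_0 (fst x - fst y)). pose proof (pow2_ge_0 (snd x - snd y)). lra. }
  exists (fun _ => (fst y - fst x) / l), (fun _ => (snd y - snd x) / l).
  split; [|split; [|split; [|split]]]; try (intros t _ e He; exists 1; split; [lra|]; intros s _ Hst).
  - intros _. unfold arc, seg; fold l; cbn [fst snd].
    replace (((1 - s / l) * fst x + s / l * fst y - ((1 - t / l) * fst x + t / l * fst y)) / (s - t) -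
      (fst y - fst x) / l) with 0 by (field; split; lra). rewrite Rabs_R0. lra.
  - intros _. unfold arc, seg; fold l; cbn [fst snd].
    replace (((1 - s / l) * snd x + s / l * snd y - ((1 - t / l) * snd x + t / l * snd y)) / (s - t) -
      (snd y - snd x) / l) with 0 by (field; split; lra). rewrite Rabs_R0. lra.
  - rewrite Rminus_diag, Rabs_R0. lra.
  - rewrite Rminus_diag, Rabs_R0. lra.
  - intros t _. apply Rmult_eq_reg_r with (l ^ 2); [|nra]. field_simplify; [|lra]. rewrite Hl2. ring.
Qed.

End Arc.

Lemma list_nat_bound (l : list nat) : exists N, forall i, In i l -> (i <= N)%nat.
Proof.
  induction l as [|a l [N HN]]; [exists O; simpl; tauto|].
  exists (Nat.max a N). intros i [->|Hi]; [lia|]. specialize (HN i Hi). lia.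
Qed.

Lemma compact_set_closed K x : compact_set K -> closure K x -> K x.
Proof.
  intros HC Hcl. apply NNPP. intros Hx.
  destruct (HC nat (fun n y => / INR (S n) < edist x y)) as [l Hl].
  - intros n y Hy. exists (edist x y - / INR (S n)). split; [lra|]. intros z Hz.
    pose proof (edist_triangle x z y). rewrite (edist_sym z y) in H. lra.
  - intros y Hy. assert (Hxy : 0 < edist x y).
    { destruct (edist_ge0 x y) as [|E]; auto. exfalso. apply Hx. symmetry in E. apply edist_eq0 in E. congruence. }
    destruct (archimed_cor1 _ Hxy) as [N [HN HN0]]. exists N.
    apply Rle_lt_trans with (/ INR N); auto. apply Rinv_le_contravar; [apply lt_0_INR; lia|apply le_INR; lia].
  - destruct (list_nat_bound l) as [N HN].
    destruct (Hcl (/ INR (S N))) as [y [Hy Hxy]]; [apply Rinv_0_lt_compat, lt_0_INR; lia|].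
    destruct (Hl y Hy) as [i [Hi Hu]]. specialize (HN i Hi).
    assert (/ INR (S N) <= / INR (S i)) by (apply Rinv_le_contravar; [apply lt_0_INR; lia|apply le_INR; lia]).
    lra.
Qed.

Lemma compact_set_bounded K c : compact_set K -> exists M, forall x, K x -> edist x c <= M.
Proof.
  intros HC. destruct (HC nat (fun n y => edist y c < INR n)) as [l Hl].
  - intros n y Hy. exists (INR n - edist y c). split; [lra|]. intros z Hz.
    pose proof (edist_triangle z y c). rewrite edist_sym in Hz. lra.
  - intros y Hy. destruct (INR_archimed 1 (edist y c)) as [n Hn]; [lra|]. exists n. lra.
  - destruct (list_nat_bound l) as [N HN]. exists (INR N).
    intros x Hx. destruct (Hl x Hx) as [i [Hi Hu]]. specialize (HN i Hi). apply le_INR in HN. lra.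
Qed.

(** * Polygonal curves parametrized by arclength *)

Definition link (Z : nat -> pt) k := edist (Z k) (Z (S k)).
Definition vtime (Z : nat -> pt) k := psum (link Z) k.

Definition converges_to (Z : nat -> pt) (q : pt) :=
  forall e, 0 < e -> exists M, forall k, (M <= k)%nat -> edist (Z k) q < e.

(* The polygon Z 0, Z 1, ..., run at unit speed; after all its vertices it rests at q. *)
Definition polyline (Z : nat -> pt) (q : pt) (t : R) : pt :=
  match excluded_middle_informative (exists k, vtime Z k <= t < vtime Z (S k)) with
  | left H => let k := proj1_sig (constructive_indefinite_description _ H) in arc (Z k) (Z (S k)) (t - vtime Z k)
  | right _ => q
  end.

Lemma vtime_S Z k : vtime Z (S k) = vtime Z k + link Z k.
Proof. reflexivity. Qed.

Lemma link_ge0 Z k : 0 <= link Z k.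
Proof. apply edist_ge0. Qed.

Lemma link_pos_neq Z k : 0 < link Z k -> Z k <> Z (S k).
Proof. unfold link. intros H E. rewrite E, edist_xx in H. lra. Qed.

Lemma vtime_mono Z j k : (j <= k)%nat -> vtime Z j <= vtime Z k.
Proof. induction 1; [lra|]. rewrite vtime_S. pose proof (link_ge0 Z m). lra. Qed.

Lemma vtime_interval_unique Z k k' t :
  vtime Z k <= t < vtime Z (S k) -> vtime Z k' <= t < vtime Z (S k') -> k = k'.
Proof.
  intros H H'. destruct (Nat.lt_trichotomy k k') as [Hl|[E|Hl]]; auto.
  - pose proof (vtime_mono Z (S k) k' Hl). lra.
  - pose proof (vtime_mono Z (S k') k Hl). lra.
Qed.

Lemma polyline_in Z q k t : vtime Z k <= t < vtime Z (S k) -> polyline Z q t = arc (Z k) (Z (S k)) (t - vtime Z k).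
Proof.
  intros H. unfold polyline. destruct (excluded_middle_informative _) as [H'|H'].
  - destruct (constructive_indefinite_description _ H') as [k' Hk']. simpl.
    rewrite (vtime_interval_unique Z k' k t); auto.
  - exfalso; eauto.
Qed.

Lemma polyline_out Z q t : ~ (exists k, vtime Z k <= t < vtime Z (S k)) -> polyline Z q t = q.
Proof. intros H. unfold polyline. destruct (excluded_middle_informative _); tauto. Qed.

Lemma link_pos_of_interval Z k t : vtime Z k <= t < vtime Z (S k) -> 0 < link Z k.
Proof. rewrite vtime_S. lra. Qed.

Lemma chain_edist Z j k : (j <= k)%nat -> edist (Z j) (Z k) <= vtime Z k - vtime Z j.
Proof.
  induction 1; [rewrite edist_xx; lra|].
  pose proof (edist_triangle (Z j) (Z m) (Z (S m))). rewrite vtime_S. unfold link. lra.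
Qed.

Lemma flat_stretch Z k n : (forall d, (d < n)%nat -> link Z (k + d) = 0) ->
  forall d, (d <= n)%nat -> Z (k + d)%nat = Z k /\ vtime Z (k + d) = vtime Z k.
Proof.
  intros Hz d Hd. induction d; [rewrite Nat.add_0_r; auto|].
  destruct IHd as [IH1 IH2]; [lia|]. replace (k + S d)%nat with (S (k + d)) by lia.
  specialize (Hz d ltac:(lia)). rewrite vtime_S, Hz, IH2. split; [|ring].
  rewrite <- IH1. symmetry. apply edist_eq0. exact Hz.
Qed.

Section Polyline.

Variables (Z : nat -> pt) (q : pt) (L : R).
Hypothesis Hconv : converges_to Z q.
Hypothesis Hbound : forall k, vtime Z k <= L.
Hypothesis Hsup : forall e, 0 < e -> exists M, L - vtime Z M < e.

Lemma polyline_vtime k : polyline Z q (vtime Z k) = Z k.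
Proof.
  destruct (classic (exists j, vtime Z j <= vtime Z k < vtime Z (S j))) as [[j Hj]|Hn].
  - rewrite (polyline_in Z q j) by auto.
    assert (Hjk : (k <= j)%nat).
    { destruct (Nat.le_gt_cases k j); auto. pose proof (vtime_mono Z (S j) k ltac:(lia)). lra. }
    pose proof (vtime_mono Z k j Hjk).
    assert (Hz : forall d, (d < j - k)%nat -> link Z (k + d) = 0).
    { intros d Hd. pose proof (vtime_mono Z (S (k + d)) j ltac:(lia)). pose proof (vtime_mono Z k (k + d) ltac:(lia)).
      rewrite vtime_S in *. pose proof (link_ge0 Z (k + d)). lra. }
    destruct (flat_stretch Z k (j - k) Hz (j - k) (le_n _)) as [E1 E2].
    replace (k + (j - k))%nat with j in * by lia. rewrite E1, E2, Rminus_diag.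
    unfold arc, Rdiv. rewrite Rmult_0_l. apply seg0.
  - rewrite polyline_out by auto.
    assert (Hz : forall d, link Z (k + d) = 0).
    { intros d. induction d as [d IH] using (well_founded_induction Wf_nat.lt_wf).
      destruct (link_ge0 Z (k + d)) as [Hp|]; auto. exfalso. apply Hn. exists (k + d)%nat.
      destruct (flat_stretch Z k d IH d (le_n d)) as [_ E]. rewrite vtime_S, E. lra. }
    symmetry. apply edist_eq0. destruct (edist_ge0 (Z k) q) as [Hp|]; auto. exfalso.
    destruct (Hconv _ Hp) as [M HM]. specialize (HM (k + M)%nat ltac:(lia)).
    rewrite (proj1 (flat_stretch Z k M (fun d _ => Hz d) M (le_n M))) in HM. lra.
Qed.

Lemma polyline_on_link k t : 0 < link Z k -> vtime Z k <= t <= vtime Z (S k) ->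
  polyline Z q t = arc (Z k) (Z (S k)) (t - vtime Z k).
Proof.
  intros Hl [H1 [H2|H2]]; [apply polyline_in; lra|].
  subst. rewrite polyline_vtime, vtime_S. replace (vtime Z k + link Z k - vtime Z k) with (link Z k) by ring.
  symmetry. apply arc_end. apply link_pos_neq; auto.
Qed.

Lemma polyline_end : polyline Z q L = q.
Proof. apply polyline_out. intros [k Hk]. specialize (Hbound (S k)). lra. Qed.

Lemma locate_link t : 0 <= t < L -> exists k, vtime Z k <= t < vtime Z (S k).
Proof.
  intros Ht. destruct (Hsup (L - t)) as [M HM]; [lra|].
  assert (Hex : forall n, t < vtime Z n -> exists k, vtime Z k <= t < vtime Z (S k)).
  { induction n; intros Hn; [unfold vtime in Hn; simpl in Hn; lra|]. destruct (Rlt_le_dec t (vtime Z n)); auto. exists n; lra. }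
  apply (Hex M). lra.
Qed.

Lemma edist_polyline_vertex j k s : vtime Z j <= s < vtime Z (S j) -> (S j <= k)%nat ->
  edist (polyline Z q s) (Z k) <= vtime Z k - s.
Proof.
  intros Hs Hk. pose proof (link_pos_neq Z j (link_pos_of_interval Z j s Hs)) as Hne.
  rewrite (polyline_in Z q j) by auto. rewrite vtime_S in Hs.
  pose proof (edist_arc_end _ _ Hne (s - vtime Z j) ltac:(unfold link in Hs; lra)).
  pose proof (chain_edist Z (S j) k Hk). rewrite vtime_S in *.
  pose proof (edist_triangle (arc (Z j) (Z (S j)) (s - vtime Z j)) (Z (S j)) (Z k)). unfold link in *. lra.
Qed.

Lemma polyline_lipschitz_lt s t : 0 <= s <= t -> t < L ->
  edist (polyline Z q s) (polyline Z q t) <= t - s.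
Proof.
  intros Hst HtL. destruct (locate_link s ltac:(lra)) as [j Hj]. destruct (locate_link t ltac:(lra)) as [k Hk].
  destruct (Nat.lt_trichotomy j k) as [Hjk|[<-|Hjk]].
  - pose proof (edist_polyline_vertex j k s Hj Hjk).
    pose proof (link_pos_neq Z k (link_pos_of_interval Z k t Hk)) as Hne.
    rewrite (polyline_in Z q k t Hk).
    pose proof (edist_triangle (polyline Z q s) (Z k) (arc (Z k) (Z (S k)) (t - vtime Z k))) as Htri.
    rewrite (edist_sym (Z k)), edist_arc_start in Htri by (auto; lra). lra.
  - pose proof (link_pos_neq Z j (link_pos_of_interval Z j s Hj)) as Hne.
    rewrite !(polyline_in Z q j), edist_arc by auto. split_Rabs; lra.
  - pose proof (vtime_mono Z (S k) j Hjk). lra.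
Qed.

Lemma polyline_lipschitz_end s : 0 <= s <= L -> edist (polyline Z q s) q <= L - s.
Proof.
  intros Hs. destruct (Req_dec s L) as [->|Hne]; [rewrite polyline_end, edist_xx; lra|].
  destruct (locate_link s ltac:(lra)) as [j Hj].
  apply Rnot_lt_le. intros Hlt. set (e := edist (polyline Z q s) q - (L - s)).
  destruct (Hconv (e / 2)) as [M HM]; [unfold e; lra|].
  pose proof (edist_polyline_vertex j (S j + M) s Hj ltac:(lia)). specialize (HM (S j + M)%nat ltac:(lia)).
  pose proof (Hbound (S j + M)%nat). pose proof (edist_triangle (polyline Z q s) (Z (S j + M)%nat) q).
  unfold e in *. lra.
Qed.

Lemma polyline_lipschitz s t : 0 <= s <= L -> 0 <= t <= L ->
  edist (polyline Z q s) (polyline Z q t) <= Rabs (s - t).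
Proof.
  assert (Hle : forall s t, 0 <= s <= t -> t <= L -> edist (polyline Z q s) (polyline Z q t) <= t - s).
  { intros s' t' H1 H2. destruct (Req_dec t' L) as [->|Hne].
    - rewrite polyline_end. apply polyline_lipschitz_end. lra.
    - apply polyline_lipschitz_lt; lra. }
  intros Hs Ht. destruct (Rle_dec s t).
  - rewrite Rabs_left1 by lra. replace (- (s - t)) with (t - s) by ring. apply Hle; lra.
  - rewrite edist_sym, Rabs_pos_eq by lra. apply Hle; lra.
Qed.

(* The length is at least that of the polygons through the first k vertices and q. *)
Lemma polyline_is_length : is_length (polyline Z q) 0 L L.
Proof.
  split.
  - intros v. replace L with (L - 0) at 2 by ring. apply polygon_length_le_of_lipschitz.
    intros; apply polyline_lipschitz; auto.
  - intros u Hu. apply Rnot_lt_le. intros Hlt. destruct (Hsup (L - u)) as [k Hk]; [lra|].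
    set (sq := fun i => if Nat.leb i k then vtime Z i else L).
    assert (Hsk : forall i, (i <= k)%nat -> sq i = vtime Z i).
    { intros i Hi. unfold sq. apply Nat.leb_le in Hi. rewrite Hi. auto. }
    assert (HsS : sq (S k) = L).
    { unfold sq. replace (Nat.leb (S k) k) with false by (symmetry; apply Nat.leb_gt; lia). auto. }
    assert (Hpoly : polygon_lengths (polyline Z q) 0 L (vtime Z k + edist (Z k) q)).
    { exists (S k), sq. split; [rewrite Hsk by lia; reflexivity|]. split; [auto|]. split.
      - intros i Hi. rewrite Hsk by lia. destruct (Nat.eq_dec i k) as [->|Hne].
        + rewrite HsS; auto.
        + rewrite Hsk by lia. apply vtime_mono; lia.
      - simpl psum. rewrite Hsk, HsS, polyline_vtime, polyline_end by lia. f_equal.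
        apply psum_ext. intros i Hi. rewrite !Hsk by lia. rewrite !polyline_vtime. reflexivity. }
    specialize (Hu _ Hpoly). pose proof (edist_ge0 (Z k) q). lra.
Qed.

Lemma polyline_is_curve (X : pt -> Prop) : X q -> (forall k u, 0 <= u <= 1 -> X (seg (Z k) (Z (S k)) u)) ->
  is_curve X (polyline Z q) 0 L (Z O) q.
Proof.
  intros Hq HX. assert (HL0 : 0 <= L) by apply (Hbound O).
  split; [auto|]. split; [apply (polyline_vtime O)|]. split; [apply polyline_end|]. split.
  - intros t Ht. unfold polyline. destruct (excluded_middle_informative _) as [H|H]; auto.
    destruct (constructive_indefinite_description _ H) as [k Hk]. simpl. unfold arc. apply HX.
    pose proof (link_pos_of_interval Z k t Hk) as Hl. rewrite vtime_S in Hk. fold (link Z k). split.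
    + apply Rmult_le_pos; [lra|left; apply Rinv_0_lt_compat; auto].
    + apply Rmult_le_reg_r with (link Z k); auto. field_simplify; lra.
  - intros t Ht e He. exists e. split; auto. intros s Hs Hst. pose proof (polyline_lipschitz s t Hs Ht). lra.
Qed.

Lemma polyline_link_image k : 0 < link Z k ->
  set_eq (segment (Z k) (Z (S k))) (image_on (polyline Z q) (vtime Z k) (vtime Z (S k))).
Proof.
  intros Hl x. pose proof (link_pos_neq Z k Hl) as Hne. rewrite (arc_image _ _ Hne x). rewrite vtime_S.
  split; intros [t [Ht <-]].
  - exists (vtime Z k + t). split; [unfold link in *; lra|].
    rewrite (polyline_on_link k) by (auto; rewrite vtime_S; unfold link in *; lra). f_equal. ring.
  - exists (t - vtime Z k). split; [unfold link in *; lra|].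
    rewrite (polyline_on_link k) by (auto; rewrite vtime_S; lra). reflexivity.
Qed.

Lemma first_positive_link n : (exists k, (n <= k)%nat /\ 0 < link Z k) ->
  exists k, (n <= k)%nat /\ 0 < link Z k /\ vtime Z k = vtime Z n.
Proof.
  intros [k0 Hk0]. induction k0 as [k0 IH] using (well_founded_induction Wf_nat.lt_wf).
  destruct (classic (exists k, (n <= k < k0)%nat /\ 0 < link Z k)) as [[k [Hk Hp]]|Hno].
  - apply (IH k); [lia|split; [lia|auto]].
  - exists k0. split; [apply Hk0|]. split; [apply Hk0|].
    assert (Hz : forall d, (d < k0 - n)%nat -> link Z (n + d) = 0).
    { intros d Hd. destruct (link_ge0 Z (n + d)); auto. exfalso. apply Hno. exists (n + d)%nat. split; [lia|auto]. }
    destruct (flat_stretch Z n (k0 - n) Hz (k0 - n) (le_n _)) as [_ E].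
    replace (n + (k0 - n))%nat with k0 in E by (destruct Hk0; lia). exact E.
Qed.

Variables (Rc : nat -> pt -> Prop) (alpha : nat -> R) (r : nat -> R -> pt).
Hypothesis Htrav : forall k, 0 < link Z k ->
  exists j, traverses Rc alpha r (polyline Z q) (vtime Z k) (vtime Z (S k)) j.

Lemma concat_of_polyline_infinite : (forall n, exists k, (n <= k)%nat /\ 0 < link Z k) ->
  concat_of_curves Rc alpha r (polyline Z q) 0 L q.
Proof.
  intros Hinf. right.
  destruct (choice (fun n k => (n <= k)%nat /\ 0 < link Z k /\ vtime Z k = vtime Z n))
    as [nx Hnx]; [intros n; apply first_positive_link, Hinf|].
  destruct (choice (fun k j => 0 < link Z k -> traverses Rc alpha r (polyline Z q) (vtime Z k) (vtime Z (S k)) j))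
    as [js Hjs].
  { intros k. destruct (Rlt_le_dec 0 (link Z k)) as [Hp|Hn].
    - destruct (Htrav k Hp) as [j Hj]. exists j. auto.
    - exists O. intros Hp. lra. }
  (* the k-th positive link *)
  set (sg := fix sg k := match k with O => nx O | S k' => nx (S (sg k')) end).
  assert (Hsg : forall k, (k <= sg k)%nat /\ 0 < link Z (sg k) /\ vtime Z (sg (S k)) = vtime Z (S (sg k))).
  { induction k as [|k [IH1 [IH2 _]]].
    - destruct (Hnx O) as [H1 [H2 _]]. destruct (Hnx (S (nx O))) as [H3 [_ H4]]. simpl. repeat split; auto; lia.
    - destruct (Hnx (S (sg k))) as [H1 [H2 _]]. destruct (Hnx (S (sg (S k)))) as [H3 [_ H4]].
      change (sg (S k)) with (nx (S (sg k))) in *. repeat split; auto; lia. }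
  exists (fun k => vtime Z (sg k)), (fun k => js (sg k)). split; [|split].
  - destruct (Hnx O) as [_ [_ E]]. simpl. rewrite E. reflexivity.
  - intros k. destruct (Hsg k) as [_ [Hp E]]. rewrite E. split; [split|].
    + rewrite vtime_S. lra.
    + apply Hbound.
    + apply Hjs; auto.
  - intros e He. destruct (Hconv e He) as [M HM]. exists M. intros k Hk. rewrite polyline_vtime.
    apply HM. pose proof (proj1 (Hsg k)). lia.
Qed.

Lemma concat_of_polyline_prefix n : exists N t js, t O = 0 /\ t N = vtime Z n /\
  forall k, (k < N)%nat -> t k < t (S k) /\ traverses Rc alpha r (polyline Z q) (t k) (t (S k)) (js k).
Proof.
  induction n as [|n [N [t [js [H0 [HN Hk]]]]]].
  - exists O, (fun _ => 0), (fun _ => O). split; [reflexivity|split; [reflexivity|intros; lia]].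
  - destruct (link_ge0 Z n) as [Hp|Hz].
    + destruct (Htrav n Hp) as [j Hj].
      exists (S N), (fun k => if Nat.eqb k (S N) then vtime Z (S n) else t k),
        (fun k => if Nat.eqb k N then j else js k). simpl. rewrite Nat.eqb_refl.
      split; [auto|split; [reflexivity|]]. intros k Hkl.
      replace (Nat.eqb k (S N)) with false by (symmetry; apply Nat.eqb_neq; lia).
      destruct (Nat.eq_dec k N) as [->|Hne].
      * rewrite Nat.eqb_refl, HN, vtime_S. split; [lra|]. rewrite <- vtime_S. auto.
      * replace (Nat.eqb (S k) (S N)) with false by (symmetry; apply Nat.eqb_neq; lia).
        replace (Nat.eqb k N) with false by (symmetry; apply Nat.eqb_neq; lia). apply Hk. lia.
    + exists N, t, js. split; [auto|split; [|auto]]. rewrite vtime_S, <- Hz, HN. ring.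
Qed.

Lemma concat_of_polyline : concat_of_curves Rc alpha r (polyline Z q) 0 L q.
Proof.
  destruct (classic (forall n, exists k, (n <= k)%nat /\ 0 < link Z k)) as [Hinf|Hfin];
    [apply concat_of_polyline_infinite; auto|left].
  apply not_all_ex_not in Hfin. destruct Hfin as [n Hn].
  assert (Hz : forall d, link Z (n + d) = 0).
  { intros d. destruct (link_ge0 Z (n + d)); auto. exfalso. apply Hn. exists (n + d)%nat. split; [lia|auto]. }
  assert (HLn : L = vtime Z n).
  { apply Rle_antisym; [|apply Hbound]. apply Rnot_lt_le. intros Hlt.
    destruct (Hsup (L - vtime Z n)) as [M HM]; [lra|]. pose proof (vtime_mono Z M (n + M) ltac:(lia)).
    rewrite (proj2 (flat_stretch Z n (S M) (fun d _ => Hz d) M ltac:(lia))) in H. lra. }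
  destruct (concat_of_polyline_prefix n) as [N [t [js [H0 [HN Hk]]]]].
  exists N, t, js. split; [auto|split; [congruence|split; [apply polyline_end|auto]]].
Qed.

End Polyline.

Definition scale (n : nat) : R := (/ 2) ^ n.

Lemma scale_pos n : 0 < scale n.
Proof. apply pow_lt. lra. Qed.

Lemma scale_S n : scale (S n) = scale n / 2.
Proof. unfold scale; simpl. field. Qed.

Lemma scale_le1 n : scale n <= 1.
Proof. induction n; [unfold scale; simpl; lra|]. rewrite scale_S. pose proof (scale_pos n). lra. Qed.

Lemma scale_anti n m : (n <= m)%nat -> scale m <= scale n.
Proof. induction 1; [lra|]. rewrite scale_S. pose proof (scale_pos m). lra. Qed.

Lemma scale_pow2 n : INR (2 ^ n) * scale n = 1.
Proof.
  unfold scale. rewrite pow_INR, <- Rpow_mult_distr. simpl (INR 2).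
  replace ((1 + 1) * / 2) with 1 by field. apply pow1.
Qed.

Lemma scale_small e C : 0 < e -> 0 <= C -> exists n, scale n * C < e.
Proof.
  intros He HC. destruct (pow_lt_1_zero (/ 2) ltac:(rewrite Rabs_pos_eq; lra) (e / (C + 1)))
    as [n Hn]; [apply Rdiv_lt_0_compat; lra|].
  exists n. specialize (Hn n (le_n n)). rewrite Rabs_pos_eq in Hn by (left; apply scale_pos).
  fold (scale n) in Hn. apply Rmult_lt_compat_r with (r := C + 1) in Hn; [|lra].
  unfold Rdiv in Hn. rewrite Rmult_assoc, Rinv_l, Rmult_1_r in Hn by lra.
  pose proof (scale_pos n). nra.
Qed.

Section Similitudes.

Variable P : idx -> pt.

Lemma Fw_app w v x : Fw P (w ++ v) x = Fw P w (Fw P v x).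
Proof. induction w; simpl; congruence. Qed.

Lemma Fmap_fix a : Fmap P a (P a) = P a.
Proof. unfold Fmap. destruct (P a); simpl; f_equal; ring. Qed.

Lemma Fmap_swap c k : Fmap P c (P k) = Fmap P k (P c).
Proof. unfold Fmap. simpl. f_equal; field. Qed.

Lemma Fw_repeat_fix a n : Fw P (repeat a n) (P a) = P a.
Proof. induction n; simpl; auto. rewrite IHn. apply Fmap_fix. Qed.

Lemma Fmap_eq_seg j x : Fmap P j x = seg x (P j) (/ 2).
Proof. unfold Fmap, seg; simpl; f_equal; field. Qed.

Lemma Fw_seg w x y t : Fw P w (seg x y t) = seg (Fw P w x) (Fw P w y) t.
Proof. induction w; simpl; auto. rewrite IHw. unfold Fmap, seg; simpl; f_equal; ring. Qed.

Lemma Fw_sub w x y :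
  fst (Fw P w x) - fst (Fw P w y) = scale (length w) * (fst x - fst y) /\
  snd (Fw P w x) - snd (Fw P w y) = scale (length w) * (snd x - snd y).
Proof.
  induction w as [|i w [IH1 IH2]]; simpl; [unfold scale; simpl; split; ring|].
  rewrite scale_S. unfold Fmap; simpl. split; lra.
Qed.

Lemma edist_Fw w x y : edist (Fw P w x) (Fw P w y) = scale (length w) * edist x y.
Proof.
  unfold edist. destruct (Fw_sub w x y) as [-> ->].
  replace ((scale (length w) * (fst x - fst y)) ^ 2 + (scale (length w) * (snd x - snd y)) ^ 2)
    with (scale (length w) ^ 2 * ((fst x - fst y) ^ 2 + (snd x - snd y) ^ 2)) by ring.
  rewrite sqrt_mult_alt, sqrt_pow2 by (apply pow2_ge_0 || (left; apply scale_pos)). reflexivity.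
Qed.

Lemma cell_edge_segment w a b x :
  cell_edge P w a b x <-> segment (Fw P w (P a)) (Fw P w (P b)) x.
Proof.
  split; intros [u [Hu ->]]; exists u; split; auto.
  - change (Fw P w (seg (P a) (P b) u) = seg (Fw P w (P a)) (Fw P w (P b)) u). apply Fw_seg.
  - change (seg (Fw P w (P a)) (Fw P w (P b)) u = Fw P w (seg (P a) (P b) u)). symmetry; apply Fw_seg.
Qed.

End Similitudes.

(** * Barycentric coordinates *)

Definition idx_eq_dec (a b : idx) : {a = b} + {a <> b}.
Proof. decide equality. Defined.

Definition kron (i j : idx) : R := if idx_eq_dec i j then 1 else 0.

Lemma kron_ge0 i j : 0 <= kron i j.
Proof. unfold kron; destruct (idx_eq_dec i j); lra. Qed.

Lemma idx_lt_neq a b : idx_lt a b -> a <> b.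
Proof. destruct a, b; simpl; intros; try tauto; discriminate. Qed.

Lemma idx_lt_total i j : i <> j -> idx_lt i j \/ idx_lt j i.
Proof. destruct i, j; simpl; intros; try congruence; tauto. Qed.

Fixpoint cell_offset (i : idx) (w : list idx) : R :=
  match w with nil => 0 | j :: w' => (cell_offset i w' + kron i j) / 2 end.

Lemma cell_offset_ge0 i w : 0 <= cell_offset i w.
Proof. induction w; simpl; [lra|]. pose proof (kron_ge0 i a). lra. Qed.

Section Barycentric.

Variable P : idx -> pt.
Hypothesis HE : equilateral P.

Definition side := edist (P i1) (P i2).

Definition ux := fst (P i2) - fst (P i1).
Definition uy := snd (P i2) - snd (P i1).
Definition vx := fst (P i3) - fst (P i1).
Definition vy := snd (P i3) - snd (P i1).
Definition det_uv := ux * vy - uy * vx.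

(* Coordinates of [x - p_1] in the basis [p_2 - p_1], [p_3 - p_1] (Cramer's rule). *)
Definition bary2 (x : pt) := ((fst x - fst (P i1)) * vy - (snd x - snd (P i1)) * vx) / det_uv.
Definition bary3 (x : pt) := (ux * (snd x - snd (P i1)) - uy * (fst x - fst (P i1))) / det_uv.

Definition bary (i : idx) (x : pt) : R :=
  match i with i1 => 1 - bary2 x - bary3 x | i2 => bary2 x | i3 => bary3 x end.

Lemma side_equations :
  side ^ 2 = ux ^ 2 + uy ^ 2 /\ side ^ 2 = vx ^ 2 + vy ^ 2 /\
  side ^ 2 = (ux - vx) ^ 2 + (uy - vy) ^ 2.
Proof.
  destruct HE as [_ [H12 H23]]. unfold side.
  assert (Hsq : forall x y, edist x y ^ 2 = (fst x - fst y) ^ 2 + (snd x - snd y) ^ 2).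
  { intros. unfold edist. rewrite pow2_sqrt; [ring|].
    pose proof (pow2_ge_0 (fst x - fst y)). pose proof (pow2_ge_0 (snd x - snd y)). lra. }
  assert (E13 : edist (P i1) (P i3) = edist (P i1) (P i2)) by lra.
  assert (E23 : edist (P i2) (P i3) = edist (P i1) (P i2)) by lra.
  rewrite <- E13 at 2. rewrite <- E23 at 2. rewrite !Hsq. unfold ux, uy, vx, vy.
  repeat split; ring.
Qed.

Lemma side_pos : 0 < side.
Proof.
  destruct (edist_ge0 (P i1) (P i2)) as [|E]; auto.
  exfalso. destruct HE as [Hne _]. apply Hne, edist_eq0. auto.
Qed.

Lemma dot_uv : ux * vx + uy * vy = side ^ 2 / 2.
Proof. destruct side_equations as [A [B C]]. nra. Qed.

Lemma det_uv_neq0 : det_uv <> 0.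
Proof.
  intros Hd. destruct side_equations as [A [B _]]. pose proof dot_uv. pose proof side_pos.
  assert (E : det_uv ^ 2 = (ux ^ 2 + uy ^ 2) * (vx ^ 2 + vy ^ 2) - (ux * vx + uy * vy) ^ 2)
    by (unfold det_uv; ring).
  rewrite Hd, <- A, <- B, H in E.
  assert (0 < side ^ 2) by (apply pow_lt; lra). nra.
Qed.

Lemma bary_coords x :
  x = (fst (P i1) + bary2 x * ux + bary3 x * vx, snd (P i1) + bary2 x * uy + bary3 x * vy).
Proof.
  pose proof det_uv_neq0. destruct x as [x1 x2]. unfold bary2, bary3, det_uv in *; simpl.
  f_equal; field; auto.
Qed.

Lemma bary_inj x y : (forall i, bary i x = bary i y) -> x = y.
Proof.
  intros H. rewrite (bary_coords x), (bary_coords y).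
  specialize (H i2) as E2. specialize (H i3) as E3. simpl in E2, E3. rewrite E2, E3. reflexivity.
Qed.

Lemma bary_sum x : bary i1 x + bary i2 x + bary i3 x = 1.
Proof. simpl. ring. Qed.

Lemma bary_vertex i j : bary i (P j) = kron i j.
Proof.
  pose proof det_uv_neq0. unfold kron.
  destruct i, j; simpl; unfold bary2, bary3, det_uv, ux, uy, vx, vy in *;
    repeat match goal with |- context [idx_eq_dec ?a ?b] => destruct (idx_eq_dec a b); try discriminate end;
    field; auto.
Qed.

Lemma bary_seg i x y t : bary i (seg x y t) = (1 - t) * bary i x + t * bary i y.
Proof. pose proof det_uv_neq0. destruct i; simpl; unfold bary2, bary3, seg; simpl; field; auto. Qed.

Lemma bary_Fw i w x : bary i (Fw P w x) = scale (length w) * bary i x + cell_offset i w.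
Proof.
  induction w as [|j w IH]; simpl; [unfold scale; simpl; ring|].
  rewrite Fmap_eq_seg, bary_seg, bary_vertex, IH, scale_S. field.
Qed.

Lemma bary_corner i w j : bary i (Fw P w (P j)) = scale (length w) * kron i j + cell_offset i w.
Proof. rewrite bary_Fw, bary_vertex. reflexivity. Qed.

Lemma edist_sq_bary x y :
  edist x y ^ 2 = side ^ 2 * ((bary2 x - bary2 y) ^ 2 + (bary3 x - bary3 y) ^ 2 +
                               (bary2 x - bary2 y) * (bary3 x - bary3 y)).
Proof.
  unfold edist. rewrite pow2_sqrt by (pose proof (pow2_ge_0 (fst x - fst y)); pose proof (pow2_ge_0 (snd x - snd y)); lra).
  rewrite (bary_coords x) at 1 2. rewrite (bary_coords y) at 1 2. simpl.
  destruct side_equations as [A [B _]]. pose proof dot_uv.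
  set (a := bary2 x - bary2 y). set (b := bary3 x - bary3 y).
  transitivity (a ^ 2 * (ux ^ 2 + uy ^ 2) + b ^ 2 * (vx ^ 2 + vy ^ 2) + 2 * a * b * (ux * vx + uy * vy));
    [unfold a, b; ring|].
  rewrite <- A, <- B, H. field.
Qed.

Definition bary_l1 x y := Rabs (bary i1 x - bary i1 y) + Rabs (bary i2 x - bary i2 y) + Rabs (bary i3 x - bary i3 y).

Lemma bary_l1_ge0 x y : 0 <= bary_l1 x y.
Proof. unfold bary_l1. pose proof (Rabs_pos (bary i1 x - bary i1 y)). pose proof (Rabs_pos (bary i2 x - bary i2 y)). pose proof (Rabs_pos (bary i3 x - bary i3 y)). lra. Qed.

Lemma bary_l1_eq x y :
  bary_l1 x y = Rabs ((bary2 x - bary2 y) + (bary3 x - bary3 y)) + Rabs (bary2 x - bary2 y) + Rabs (bary3 x - bary3 y).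
Proof.
  unfold bary_l1. simpl. rewrite <- Rabs_Ropp. f_equal. f_equal. f_equal. ring.
Qed.

Lemma edist_sq_le_bary_l1 x y : edist x y ^ 2 <= side ^ 2 * bary_l1 x y ^ 2 / 4.
Proof.
  rewrite edist_sq_bary, bary_l1_eq. pose proof (pow2_ge_0 side).
  set (a := bary2 x - bary2 y). set (b := bary3 x - bary3 y).
  assert (a ^ 2 + b ^ 2 + a * b <= (Rabs (a + b) + Rabs a + Rabs b) ^ 2 / 4) by (split_Rabs; nra).
  nra.
Qed.

Lemma bary_l1_le_edist_sq x y : 3 / 16 * side ^ 2 * bary_l1 x y ^ 2 <= edist x y ^ 2.
Proof.
  rewrite edist_sq_bary, bary_l1_eq. pose proof (pow2_ge_0 side).
  set (a := bary2 x - bary2 y). set (b := bary3 x - bary3 y).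
  assert (3 / 16 * (Rabs (a + b) + Rabs a + Rabs b) ^ 2 <= a ^ 2 + b ^ 2 + a * b).
  { pose proof (pow2_ge_0 (a - b)). pose proof (pow2_ge_0 (a + 2 * b)). pose proof (pow2_ge_0 (2 * a + b)).
    split_Rabs; nra. }
  nra.
Qed.

Lemma edist_vertices a b : a <> b -> edist (P a) (P b) = side.
Proof.
  destruct HE as [Hne [H1 H2]]. intros Hab. unfold side.
  destruct a, b; try congruence; repeat rewrite (edist_sym (P i2) (P i1)) in *;
    repeat rewrite (edist_sym (P i3) (P i1)) in *; repeat rewrite (edist_sym (P i3) (P i2)) in *; lra.
Qed.

Lemma edist_corners w i j : i <> j -> edist (Fw P w (P i)) (Fw P w (P j)) = scale (length w) * side.
Proof. intros Hij. rewrite edist_Fw, edist_vertices; auto. Qed.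

Lemma edge_length_eq w a b : a <> b -> edge_length P w a b = scale (length w) * side.
Proof. apply edist_corners. Qed.

(* Two regions {bary i >= a i} and {bary i >= a' i} of the plane; [v] is their meeting
   point when sum_i max (a i, a' i) = 1, and they are disjoint when that sum exceeds 1. *)
Lemma bary_l1_meet_le z z' v (a a' : idx -> R) :
  (forall i, a i <= bary i z) -> (forall i, a' i <= bary i z') ->
  (forall i, bary i v = Rmax (a i) (a' i)) -> bary_l1 z v <= bary_l1 z z'.
Proof.
  intros Ha Ha' Hv. unfold bary_l1.
  assert (H1d : forall i, Rabs (bary i z - bary i v) - Rabs (bary i z - bary i z') <= bary i z' - bary i v).
  { intros i. specialize (Ha i). specialize (Ha' i). rewrite Hv.
    unfold Rmax. destruct (Rle_dec (a i) (a' i)); split_Rabs; lra. }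
  pose proof (H1d i1). pose proof (H1d i2). pose proof (H1d i3). pose proof (bary_sum z'). pose proof (bary_sum v). lra.
Qed.

Lemma bary_l1_overlap_ge z z' (a a' : idx -> R) :
  (forall i, a i <= bary i z) -> (forall i, a' i <= bary i z') ->
  2 * (Rmax (a i1) (a' i1) + Rmax (a i2) (a' i2) + Rmax (a i3) (a' i3)) - 2 <= bary_l1 z z'.
Proof.
  intros Ha Ha'. unfold bary_l1.
  assert (H1d : forall i, 2 * Rmax (a i) (a' i) - bary i z - bary i z' <= Rabs (bary i z - bary i z')).
  { intros i. specialize (Ha i). specialize (Ha' i). unfold Rmax. destruct (Rle_dec (a i) (a' i)); split_Rabs; lra. }
  pose proof (H1d i1). pose proof (H1d i2). pose proof (H1d i3). pose proof (bary_sum z). pose proof (bary_sum z'). lra.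
Qed.

Lemma edist_sq_le_of_bary_l1_le x y z z' : bary_l1 x y <= bary_l1 z z' ->
  edist x y ^ 2 <= 4 / 3 * edist z z' ^ 2.
Proof.
  intros Hl. pose proof (edist_sq_le_bary_l1 x y). pose proof (bary_l1_le_edist_sq z z').
  pose proof (bary_l1_ge0 x y). pose proof (pow2_ge_0 side).
  assert (bary_l1 x y ^ 2 <= bary_l1 z z' ^ 2) by nra. nra.
Qed.

End Barycentric.

Section Gasket.

Variable P : idx -> pt.
Hypothesis HE : equilateral P.
Variable K : pt -> Prop.
Hypothesis HC : compact_set K.
Hypothesis HK : exists x, K x.
Hypothesis HS : self_similar P K.

Lemma gasket_Fw w y : K y -> K (Fw P w y).
Proof. intros Hy. induction w; simpl; auto. apply HS. eauto. Qed.

Lemma gasket_address x n : K x -> exists w y, length w = n /\ K y /\ x = Fw P w y.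
Proof.
  intros Hx. induction n as [|n [w [y [Hl [Hy ->]]]]]; [exists nil, x; auto|].
  apply HS in Hy. destruct Hy as [i [y' [Hy' ->]]].
  exists (w ++ i :: nil), y'. rewrite length_app, Fw_app. simpl. split; [lia|auto].
Qed.

Lemma gasket_bary_bounded : exists M, forall i x, K x -> Rabs (bary P i x) <= M.
Proof.
  destruct (compact_set_bounded K (P i1) HC) as [M HM]. pose proof (side_pos P HE) as Hs.
  exists (2 + 16 * M ^ 2 / (3 * side P ^ 2)). intros i x Hx.
  pose proof (bary_l1_le_edist_sq P HE x (P i1)) as Hl1.
  pose proof (HM x Hx). pose proof (edist_ge0 x (P i1)).
  set (l := bary_l1 P x (P i1)) in *. pose proof (bary_l1_ge0 P x (P i1)) as Hl0. fold l in Hl0.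
  assert (Hl : l ^ 2 <= 16 * M ^ 2 / (3 * side P ^ 2)).
  { apply Rmult_le_reg_l with (3 / 16 * side P ^ 2); [apply Rmult_lt_0_compat; [lra|apply pow_lt; lra]|].
    replace (3 / 16 * side P ^ 2 * (16 * M ^ 2 / (3 * side P ^ 2))) with (M ^ 2) by (field; lra). nra. }
  assert (Hi : Rabs (bary P i x - bary P i (P i1)) <= l).
  { unfold l, bary_l1. pose proof (Rabs_pos (bary P i1 x - bary P i1 (P i1))).
    pose proof (Rabs_pos (bary P i2 x - bary P i2 (P i1))). pose proof (Rabs_pos (bary P i3 x - bary P i3 (P i1))).
    destruct i; lra. }
  rewrite bary_vertex in Hi by auto. pose proof (kron_ge0 i i1).
  assert (kron i i1 <= 1) by (unfold kron; destruct (idx_eq_dec i i1); lra).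
  assert (l <= 1 + l ^ 2) by nra. revert Hi. split_Rabs; lra.
Qed.

(* A point of K is a point of a level-n cell, and its barycentric coordinates there are
   bounded; letting n grow shows they are nonnegative in the big triangle. *)
Lemma gasket_bary_ge0 x i : K x -> 0 <= bary P i x.
Proof.
  intros Hx. apply Rnot_lt_le. intros Hlt. destruct gasket_bary_bounded as [M HM].
  assert (HM0 : 0 <= M) by (specialize (HM i x Hx); pose proof (Rabs_pos (bary P i x)); lra).
  destruct (scale_small (- bary P i x) M) as [n Hn]; [lra|auto|].
  destruct (gasket_address x n Hx) as [w [y [Hl [Hy ->]]]].
  rewrite bary_Fw, Hl in Hlt, Hn by auto. pose proof (cell_offset_ge0 i w).
  specialize (HM i y Hy). pose proof (scale_pos n).
  assert (- M <= bary P i y) by (revert HM; split_Rabs; lra). nra.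
Qed.

Lemma gasket_bary_le1 x i : K x -> bary P i x <= 1.
Proof.
  intros Hx. pose proof (bary_sum P x).
  pose proof (gasket_bary_ge0 x i1 Hx). pose proof (gasket_bary_ge0 x i2 Hx). pose proof (gasket_bary_ge0 x i3 Hx).
  destruct i; lra.
Qed.

Lemma gasket_edist_vertex z i : K z -> edist z (P i) <= side P.
Proof.
  intros Hz. pose proof (side_pos P HE).
  assert (Hl1 : bary_l1 P z (P i) = 2 * (1 - bary P i z)).
  { unfold bary_l1. rewrite !bary_vertex by auto. pose proof (bary_sum P z).
    pose proof (gasket_bary_ge0 z i1 Hz). pose proof (gasket_bary_ge0 z i2 Hz). pose proof (gasket_bary_ge0 z i3 Hz).
    unfold kron. destruct i; repeat destruct (idx_eq_dec _ _); try congruence; split_Rabs; lra. }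
  pose proof (edist_sq_le_bary_l1 P HE z (P i)) as Hsq. rewrite Hl1 in Hsq.
  pose proof (gasket_bary_ge0 z i Hz). pose proof (gasket_bary_le1 z i Hz). pose proof (edist_ge0 z (P i)).
  apply Rsqr_incr_0_var; [|lra]. rewrite !Rsqr_pow2. nra.
Qed.

Lemma gasket_cell_offset_le w y i : K y -> cell_offset i w <= bary P i (Fw P w y).
Proof.
  intros Hy. rewrite bary_Fw by auto. pose proof (gasket_bary_ge0 y i Hy).
  pose proof (scale_pos (length w)). nra.
Qed.

Lemma gasket_near_corner x n :
  K x -> exists w, length w = n /\ edist x (Fw P w (P i1)) <= scale n * side P.
Proof.
  intros Hx. destruct (gasket_address x n Hx) as [w [y [Hl [Hy ->]]]].
  exists w. split; auto. rewrite edist_Fw, Hl.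
  apply Rmult_le_compat_l; [left; apply scale_pos|]. apply gasket_edist_vertex; auto.
Qed.

Lemma gasket_corner w a : K (Fw P w (P a)).
Proof.
  destruct HK as [y0 Hy0]. apply compact_set_closed; auto. intros e He.
  destruct (scale_small e (edist (P a) y0)) as [n Hn]; auto; [apply edist_ge0|].
  exists (Fw P w (Fw P (repeat a n) y0)). split; [apply gasket_Fw, gasket_Fw; auto|].
  rewrite edist_Fw. rewrite <- (Fw_repeat_fix P a n) at 1. rewrite edist_Fw, repeat_length.
  pose proof (scale_le1 (length w)). pose proof (scale_pos (length w)). pose proof (scale_pos n).
  pose proof (edist_ge0 (P a) y0). nra.
Qed.

Lemma gasket_vertex a : K (P a).
Proof. apply (gasket_corner nil). Qed.

Lemma seg_dyadic_address a b n t : 0 <= t <= 1 ->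
  exists v t', length v = n /\ 0 <= t' <= 1 /\ seg (P a) (P b) t = Fw P v (seg (P a) (P b) t').
Proof.
  intros Ht. induction n as [|n [v [t' [Hl [Ht' E]]]]]; [exists nil, t; simpl; auto|].
  destruct (Rle_dec t' (1/2)).
  - exists (v ++ a :: nil), (2 * t'). rewrite length_app, Fw_app; simpl. split; [lia|]. split; [lra|].
    rewrite E. f_equal. unfold Fmap, seg; simpl; f_equal; field.
  - exists (v ++ b :: nil), (2 * t' - 1). rewrite length_app, Fw_app; simpl. split; [lia|]. split; [lra|].
    rewrite E. f_equal. unfold Fmap, seg; simpl; f_equal; field.
Qed.

Lemma gasket_seg a b t : 0 <= t <= 1 -> K (seg (P a) (P b) t).
Proof.
  intros Ht. apply compact_set_closed; auto. intros e He.
  destruct (scale_small e (edist (P a) (P b))) as [n Hn]; auto; [apply edist_ge0|].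
  destruct (seg_dyadic_address a b n t Ht) as [v [t' [Hl [Ht' E]]]].
  exists (Fw P v (P a)). split; [apply gasket_corner|].
  rewrite E, edist_Fw, edist_seg_l, Hl, Rabs_pos_eq by lra.
  pose proof (scale_pos n). pose proof (edist_ge0 (P a) (P b)).
  apply Rle_lt_trans with (scale n * edist (P a) (P b)); auto. apply Rmult_le_compat_l; nra.
Qed.

Lemma gasket_cell_seg w a b t : 0 <= t <= 1 -> K (seg (Fw P w (P a)) (Fw P w (P b)) t).
Proof. intros Ht. rewrite <- Fw_seg. apply gasket_Fw, gasket_seg; auto. Qed.

Lemma gasket_cell_edge w a b x : cell_edge P w a b x -> K x.
Proof. intros Hx. apply cell_edge_segment in Hx. destruct Hx as [t [Ht ->]]. apply gasket_cell_seg; auto. Qed.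

End Gasket.

Fixpoint cell_index (i : idx) (w : list idx) : nat :=
  match w with nil => O | j :: w' => (cell_index i w' + if idx_eq_dec i j then 2 ^ length w' else 0)%nat end.

Lemma cell_offset_index i w : cell_offset i w = INR (cell_index i w) * scale (length w).
Proof.
  induction w as [|j w IH]; simpl; [lra|]. rewrite IH, plus_INR, scale_S. unfold kron.
  destruct (idx_eq_dec i j); [pose proof (scale_pow2 (length w))|simpl]; lra.
Qed.

Lemma cell_index_sum w : (cell_index i1 w + cell_index i2 w + cell_index i3 w + 1 = 2 ^ length w)%nat.
Proof.
  induction w as [|j w IH]; simpl; [auto|].
  destruct j; simpl; repeat (destruct (idx_eq_dec _ _); try discriminate); lia.
Qed.

Definition kron_nat (i j : idx) : nat := if idx_eq_dec i j then 1 else 0.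

Lemma kron_knat i j : kron i j = INR (kron_nat i j).
Proof. unfold kron, kron_nat. destruct (idx_eq_dec i j); reflexivity. Qed.

Lemma max_index_step (k k' : idx -> nat) :
  (Nat.max (k i1) (k' i1) + Nat.max (k i2) (k' i2) + Nat.max (k i3) (k' i3) = k i1 + k i2 + k i3 + 1)%nat ->
  exists j, forall i, Nat.max (k i) (k' i) = (k i + kron_nat i j)%nat.
Proof.
  intros Hs. unfold kron_nat.
  destruct (Nat.le_gt_cases (Nat.max (k i1) (k' i1)) (k i1)); [destruct (Nat.le_gt_cases (Nat.max (k i2) (k' i2)) (k i2))|].
  - exists i3. intros []; simpl; lia.
  - exists i2. intros []; simpl; lia.
  - exists i1. intros []; simpl; lia.
Qed.

Lemma Rmax_INR_mult m n c : 0 <= c -> Rmax (INR m * c) (INR n * c) = INR (Nat.max m n) * c.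
Proof.
  intros Hc. destruct (Nat.le_ge_cases m n).
  - rewrite Nat.max_r, Rmax_right by (auto; apply Rmult_le_compat_r; auto; apply le_INR; auto). reflexivity.
  - rewrite Nat.max_l, Rmax_left by (auto; apply Rmult_le_compat_r; auto; apply le_INR; auto). reflexivity.
Qed.

Section Cells.

Variable P : idx -> pt.
Hypothesis HE : equilateral P.
Variable K : pt -> Prop.
Hypothesis HC : compact_set K.
Hypothesis HS : self_similar P K.

Lemma bary_corner_index i w j :
  bary P i (Fw P w (P j)) = INR (cell_index i w + kron_nat i j) * scale (length w).
Proof. rewrite bary_corner, cell_offset_index, kron_knat, plus_INR by auto. ring. Qed.

Lemma bary_cell_index_le w y i : K y -> INR (cell_index i w) * scale (length w) <= bary P i (Fw P w y).
Proof. rewrite <- cell_offset_index. apply gasket_cell_offset_le; auto. Qed.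

Section TwoCells.

Variables (w w' : list idx) (y y' : pt).
Hypothesis Hy : K y.
Hypothesis Hy' : K y'.
Hypothesis Hl : length w = length w'.

Let h := scale (length w).
Let k i := cell_index i w.
Let k' i := cell_index i w'.
Let z := Fw P w y.
Let z' := Fw P w' y'.

Let Hk i : INR (k i) * h <= bary P i z.
Proof. apply bary_cell_index_le; auto. Qed.

Let Hk' i : INR (k' i) * h <= bary P i z'.
Proof. unfold h. rewrite Hl. apply bary_cell_index_le; auto. Qed.

Let Hmax i : Rmax (INR (k i) * h) (INR (k' i) * h) = INR (Nat.max (k i) (k' i)) * h.
Proof. apply Rmax_INR_mult. left; apply scale_pos. Qed.

Lemma cells_same_corners : (forall i, k i = k' i) -> forall j, Fw P w (P j) = Fw P w' (P j).
Proof.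
  intros E j. apply (bary_inj P HE). intros i. rewrite !bary_corner_index, <- Hl.
  specialize (E i). unfold k, k' in E. rewrite E. reflexivity.
Qed.

Lemma cells_common_corner :
  (Nat.max (k i1) (k' i1) + Nat.max (k i2) (k' i2) + Nat.max (k i3) (k' i3) = 2 ^ length w)%nat ->
  exists j j', Fw P w (P j) = Fw P w' (P j') /\
    edist z (Fw P w (P j)) ^ 2 <= 4 / 3 * edist z z' ^ 2 /\ edist z' (Fw P w (P j)) ^ 2 <= 4 / 3 * edist z z' ^ 2.
Proof.
  intros Hs. pose proof (cell_index_sum w) as Sk. pose proof (cell_index_sum w') as Sk'. rewrite <- Hl in Sk'.
  destruct (max_index_step k k') as [j Hj]; [unfold k, k' in *; lia|].
  destruct (max_index_step k' k) as [j' Hj']; [unfold k, k' in *; lia|].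
  set (v := Fw P w (P j)).
  assert (Hv : forall i, bary P i v = Rmax (INR (k i) * h) (INR (k' i) * h))
    by (intros i; unfold v; rewrite bary_corner_index, Hmax, Hj; reflexivity).
  exists j, j'. split; [|split].
  - apply (bary_inj P HE). intros i. fold v. rewrite Hv, Hmax, bary_corner_index, <- Hl, Nat.max_comm, Hj'. reflexivity.
  - apply (edist_sq_le_of_bary_l1_le P HE). apply (bary_l1_meet_le P _ _ _ _ _ Hk Hk' Hv).
  - apply (edist_sq_le_of_bary_l1_le P HE). unfold bary_l1 at 2.
    rewrite !(Rabs_minus_sym (bary P _ z)). fold (bary_l1 P z' z).
    apply (bary_l1_meet_le P _ _ _ _ _ Hk' Hk). intros i. rewrite Hv, Rmax_comm. reflexivity.
Qed.

Lemma cells_far :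
  (2 ^ length w + 1 <= Nat.max (k i1) (k' i1) + Nat.max (k i2) (k' i2) + Nat.max (k i3) (k' i3))%nat ->
  3 / 4 * (h * side P) ^ 2 <= edist z z' ^ 2.
Proof.
  intros Hs. pose proof (scale_pow2 (length w)) as Hp. pose proof (scale_pos (length w)) as Hh. fold h in Hp, Hh.
  pose proof (bary_l1_overlap_ge P z z' (fun i => INR (k i) * h) (fun i => INR (k' i) * h) Hk Hk') as Hov.
  cbv beta in Hov. rewrite !Hmax in Hov.
  apply le_INR in Hs. rewrite !plus_INR in Hs. simpl (INR 1) in Hs.
  assert (Hl1 : 2 * h <= bary_l1 P z z').
  { assert ((INR (2 ^ length w) + 1) * h <=
      (INR (Nat.max (k i1) (k' i1)) + INR (Nat.max (k i2) (k' i2)) + INR (Nat.max (k i3) (k' i3))) * h)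
      by (apply Rmult_le_compat_r; lra). lra. }
  pose proof (bary_l1_le_edist_sq P HE z z'). pose proof (side_pos P HE).
  assert (4 * h ^ 2 <= bary_l1 P z z' ^ 2) by nra. nra.
Qed.

(* In barycentric coordinates a level-n cell w is {bary i >= cell_index i w * 2^-n}; the
   case is read off sum_i max (cell_index i w, cell_index i w') - (2^n - 1). *)
Lemma two_cells :
  (forall j, Fw P w (P j) = Fw P w' (P j)) \/
  (exists j j', Fw P w (P j) = Fw P w' (P j') /\
     edist z (Fw P w (P j)) ^ 2 <= 4 / 3 * edist z z' ^ 2 /\ edist z' (Fw P w (P j)) ^ 2 <= 4 / 3 * edist z z' ^ 2) \/
  3 / 4 * (scale (length w) * side P) ^ 2 <= edist z z' ^ 2.
Proof.
  pose proof (cell_index_sum w) as Sk. pose proof (cell_index_sum w') as Sk'. rewrite <- Hl in Sk'.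
  assert (Hcases : (forall i, k i = k' i) \/
     (Nat.max (k i1) (k' i1) + Nat.max (k i2) (k' i2) + Nat.max (k i3) (k' i3) = 2 ^ length w)%nat \/
     (2 ^ length w + 1 <= Nat.max (k i1) (k' i1) + Nat.max (k i2) (k' i2) + Nat.max (k i3) (k' i3))%nat).
  { destruct (Nat.eq_dec (k i1) (k' i1)), (Nat.eq_dec (k i2) (k' i2)), (Nat.eq_dec (k i3) (k' i3));
      try solve [left; intros []; auto]; right; unfold k, k' in *; lia. }
  destruct Hcases as [E|[Hs|Hs]].
  - left. apply cells_same_corners; auto.
  - right; left. apply cells_common_corner; auto.
  - right; right. apply cells_far; auto.
Qed.

End TwoCells.

End Cells.

(** * Lower bounds for lengths of curves in the gasket *)

Definition cone (f : pt -> R) (c : pt) (r Lc : R) (z : pt) : R := f c + Lc * Rmax 0 (edist z c - r).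

Definition Rmin3 (a b c : R) := Rmin (Rmin a b) c.

Lemma Rmin3_lipschitz a b c a' b' c' e :
  Rabs (a - a') <= e -> Rabs (b - b') <= e -> Rabs (c - c') <= e -> Rabs (Rmin3 a b c - Rmin3 a' b' c') <= e.
Proof. intros. unfold Rmin3, Rmin. repeat destruct (Rle_dec _ _); split_Rabs; lra. Qed.

Lemma Rmin3_ge a b c m : m <= a -> m <= b -> m <= c -> m <= Rmin3 a b c.
Proof. intros. unfold Rmin3, Rmin. repeat destruct (Rle_dec _ _); lra. Qed.

Lemma Rmin3_attained (f : idx -> R) : exists i, Rmin3 (f i1) (f i2) (f i3) = f i.
Proof. unfold Rmin3, Rmin. repeat destruct (Rle_dec _ _); eauto. Qed.

Lemma Rmin3_le_each (f : idx -> R) i : Rmin3 (f i1) (f i2) (f i3) <= f i.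
Proof. unfold Rmin3, Rmin. destruct i; repeat destruct (Rle_dec _ _); lra. Qed.

Lemma Rmin3_eq_of_le (f : idx -> R) j : (forall i, f j <= f i) -> Rmin3 (f i1) (f i2) (f i3) = f j.
Proof. intros H. pose proof (H i1). pose proof (H i2). pose proof (H i3). unfold Rmin3, Rmin. destruct j; repeat destruct (Rle_dec _ _); lra. Qed.

Lemma cone_lipschitz f c r Lc z z' : 0 <= Lc -> Rabs (cone f c r Lc z - cone f c r Lc z') <= Lc * edist z z'.
Proof.
  intros HL. unfold cone. pose proof (edist_reverse_triangle z z' c).
  replace (f c + Lc * Rmax 0 (edist z c - r) - (f c + Lc * Rmax 0 (edist z' c - r)))
    with (Lc * (Rmax 0 (edist z c - r) - Rmax 0 (edist z' c - r))) by ring.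
  rewrite Rabs_mult, Rabs_pos_eq by auto. apply Rmult_le_compat_l; auto.
  unfold Rmax. repeat destruct (Rle_dec _ _); revert H; split_Rabs; lra.
Qed.

Section Smoothing.

Variable P : idx -> pt.
Hypothesis HE : equilateral P.
Variable K : pt -> Prop.
Hypothesis HC : compact_set K.
Hypothesis HS : self_similar P K.

Definition address (n : nat) (z : pt) : list idx * pt :=
  epsilon (inhabits (nil, z)) (fun wy => length (fst wy) = n /\ K (snd wy) /\ z = Fw P (fst wy) (snd wy)).

Lemma address_spec n z : K z ->
  length (fst (address n z)) = n /\ K (snd (address n z)) /\ z = Fw P (fst (address n z)) (snd (address n z)).
Proof.
  intros Hz. unfold address. apply epsilon_spec.
  destruct (gasket_address P K HS z n Hz) as [w [y H]]. exists (w, y). exact H.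
Qed.

(* A Lipschitz regularization of [f] at the scale of the cell w: the minimum of the three
   cones of slope Lc erected over the corners, flat on their r-neighbourhoods. *)
Definition cell_smoothing (f : pt -> R) w r Lc z :=
  Rmin3 (cone f (Fw P w (P i1)) r Lc z) (cone f (Fw P w (P i2)) r Lc z) (cone f (Fw P w (P i3)) r Lc z).

Lemma cell_smoothing_lipschitz f w r Lc z z' : 0 <= Lc ->
  Rabs (cell_smoothing f w r Lc z - cell_smoothing f w r Lc z') <= Lc * edist z z'.
Proof. intros HL. apply Rmin3_lipschitz; apply cone_lipschitz; auto. Qed.

Lemma cell_smoothing_at_corner f w r Lc j z : 0 <= r -> 0 <= Lc ->
  (forall i i', Rabs (f (Fw P w (P i)) - f (Fw P w (P i'))) <= scale (length w) * side P) ->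
  scale (length w) * side P <= Lc * (scale (length w) * side P - 2 * r) ->
  edist z (Fw P w (P j)) <= r -> cell_smoothing f w r Lc z = f (Fw P w (P j)).
Proof.
  intros Hr HL Hf Hslope Hz. set (s := scale (length w) * side P) in *.
  assert (Hj : cone f (Fw P w (P j)) r Lc z = f (Fw P w (P j))) by (unfold cone; rewrite Rmax_left by lra; ring).
  unfold cell_smoothing. rewrite <- Hj.
  apply (Rmin3_eq_of_le (fun i => cone f (Fw P w (P i)) r Lc z)). intros i. rewrite Hj.
  destruct (idx_eq_dec i j) as [->|Hij]; [lra|]. unfold cone.
  pose proof (edist_corners P HE w i j Hij) as Hd. fold s in Hd.
  pose proof (edist_triangle (Fw P w (P i)) z (Fw P w (P j))) as Htri. rewrite (edist_sym _ z) in Htri.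
  assert (s - 2 * r <= Rmax 0 (edist z (Fw P w (P i)) - r)) by (eapply Rle_trans; [|apply Rmax_r]; lra).
  specialize (Hf i j). assert (Lc * (s - 2 * r) <= Lc * Rmax 0 (edist z (Fw P w (P i)) - r)) by (apply Rmult_le_compat_l; auto).
  revert Hf. split_Rabs; lra.
Qed.

Lemma cell_smoothing_ge f w r Lc z : 0 <= Lc ->
  Rmin3 (f (Fw P w (P i1))) (f (Fw P w (P i2))) (f (Fw P w (P i3))) <= cell_smoothing f w r Lc z.
Proof.
  intros HL. assert (Hc : forall j, f (Fw P w (P j)) <= cone f (Fw P w (P j)) r Lc z).
  { intros j. unfold cone. pose proof (Rmax_l 0 (edist z (Fw P w (P j)) - r)). nra. }
  unfold Rmin3, cell_smoothing. pose proof (Hc i1). pose proof (Hc i2). pose proof (Hc i3).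
  unfold Rmin3, Rmin. repeat destruct (Rle_dec _ _); lra.
Qed.

Lemma cell_smoothing_le f w r Lc z : 0 <= Lc -> 0 <= r ->
  cell_smoothing f w r Lc z <= f (Fw P w (P i1)) + Lc * edist z (Fw P w (P i1)).
Proof.
  intros HL Hr. eapply Rle_trans; [apply (Rmin3_le_each (fun i => cone f (Fw P w (P i)) r Lc z) i1)|].
  unfold cone. apply Rplus_le_compat_l, Rmult_le_compat_l; auto. apply Rmax_lub; [apply edist_ge0|lra].
Qed.

Section LowerBound.

(* [phi] stands for the geodesic distance from a fixed point. *)
Variables (phi : pt -> R) (C : R) (m0 : nat).
Hypothesis HC0 : 0 <= C.
Hypothesis Hphi_corners : forall w i j, (m0 <= length w)%nat ->
  Rabs (phi (Fw P w (P i)) - phi (Fw P w (P j))) <= scale (length w) * side P.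
Hypothesis Hphi_cell : forall w z i, (m0 <= length w)%nat -> K z ->
  Rabs (phi (Fw P w z) - phi (Fw P w (P i))) <= C * scale (length w).

Definition smoothing n r Lc z := cell_smoothing phi (fst (address n z)) r Lc z.

Section Scale.

Variables (n : nat) (delta : R).
Hypothesis Hn : (m0 <= n)%nat.
Hypothesis Hdelta : 0 < delta <= 1 / 4.

Let side_n := scale n * side P.
Let r := delta * side_n.
Let Lc := / (1 - 2 * delta).

Let side_n_pos : 0 < side_n.
Proof. pose proof (scale_pos n). pose proof (side_pos P HE). unfold side_n. nra. Qed.

Let Lc_pos : 0 < Lc.
Proof. unfold Lc. apply Rinv_0_lt_compat. lra. Qed.

(* By [two_cells], nearby points lie in one cell or close to a common corner, where the
   smoothings of both cells are flat with the value of phi at that corner. *)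
Lemma smoothing_local_lipschitz z z' : K z -> K z' -> edist z z' < r / 2 ->
  Rabs (smoothing n r Lc z - smoothing n r Lc z') <= Lc * edist z z'.
Proof.
  intros Hz Hz' Hzz. destruct (address_spec n z Hz) as [Hl1 [Hy1 E1]].
  destruct (address_spec n z' Hz') as [Hl2 [Hy2 E2]]. unfold smoothing.
  set (w := fst (address n z)) in *. set (w' := fst (address n z')) in *.
  set (y1 := snd (address n z)) in *. set (y2 := snd (address n z')) in *.
  assert (Hslope : side_n <= Lc * (side_n - 2 * r)) by (unfold Lc, r; right; field; lra).
  pose proof (edist_ge0 z z') as Hd0. pose proof side_n_pos. pose proof Lc_pos.
  destruct (two_cells P HE K HC HS w w' y1 y2 Hy1 Hy2 ltac:(lia)) as [Heq|[[j [j' [Ev [Hv1 Hv2]]]]|Hsep]];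
    try rewrite <- E1 in *; try rewrite <- E2 in *.
  - replace (cell_smoothing phi w' r Lc z') with (cell_smoothing phi w r Lc z')
      by (unfold cell_smoothing; rewrite !Heq; reflexivity).
    apply cell_smoothing_lipschitz; lra.
  - assert (Hsm : edist z z' ^ 2 <= r ^ 2 / 4) by nra.
    assert (Hz1 : edist z (Fw P w (P j)) <= r) by (apply Rsqr_incr_0_var; [rewrite !Rsqr_pow2; nra|unfold r; nra]).
    assert (Hz2 : edist z' (Fw P w' (P j')) <= r)
      by (rewrite <- Ev; apply Rsqr_incr_0_var; [rewrite !Rsqr_pow2; nra|unfold r; nra]).
    rewrite (cell_smoothing_at_corner phi w r Lc j z), (cell_smoothing_at_corner phi w' r Lc j' z');
      try (unfold r; nra); try lra; try (intros; apply Hphi_corners; lia); [|rewrite Hl2; auto|rewrite Hl1; auto].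
    rewrite Ev, Rminus_diag, Rabs_R0. nra.
  - exfalso. rewrite Hl1 in Hsep. fold side_n in Hsep.
    assert (edist z z' ^ 2 < (r / 2) ^ 2) by nra. unfold r in *.
    assert ((delta * side_n / 2) ^ 2 <= side_n ^ 2 / 64) by nra. nra.
Qed.

Lemma smoothing_ge z : K z -> phi z - C * scale n <= smoothing n r Lc z.
Proof.
  intros Hz. destruct (address_spec n z Hz) as [Hl [Hy E]]. unfold smoothing.
  set (w := fst (address n z)) in *. set (y := snd (address n z)) in *.
  assert (Hc : forall i, phi z - C * scale n <= phi (Fw P w (P i))).
  { intros i. pose proof (Hphi_cell w y i ltac:(lia) Hy) as Hq. rewrite <- E, Hl in Hq. revert Hq. split_Rabs; lra. }
  eapply Rle_trans; [|apply cell_smoothing_ge; lra]. apply Rmin3_ge; apply Hc.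
Qed.

Lemma smoothing_le z : K z -> smoothing n r Lc z <= phi z + C * scale n + Lc * side_n.
Proof.
  intros Hz. destruct (address_spec n z Hz) as [Hl [Hy E]]. unfold smoothing.
  pose proof side_n_pos. pose proof Lc_pos.
  eapply Rle_trans; [apply cell_smoothing_le; unfold r; nra|].
  pose proof (Hphi_cell (fst (address n z)) (snd (address n z)) i1 ltac:(lia) Hy) as Hq.
  rewrite <- E, Hl in Hq.
  assert (edist z (Fw P (fst (address n z)) (P i1)) <= side_n).
  { rewrite E at 1. rewrite edist_Fw, Hl. apply Rmult_le_compat_l; [left; apply scale_pos|].
    apply (gasket_edist_vertex P HE K HC HS); auto. }
  assert (Lc * edist z (Fw P (fst (address n z)) (P i1)) <= Lc * side_n) by (apply Rmult_le_compat_l; lra).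
  revert Hq. split_Rabs; lra.
Qed.

Lemma length_ge_potential_approx g a b l x y : is_curve K g a b x y -> is_length g a b l ->
  (1 - 2 * delta) * (phi y - phi x - 2 * C * scale n) - scale n * side P <= l.
Proof.
  intros Hcur Hl. pose proof side_n_pos. pose proof Lc_pos.
  assert (Hinc : smoothing n r Lc y - smoothing n r Lc x <= Lc * l).
  { apply (increment_le_length K _ Lc (r / 2) g a b x y l); auto; [lra|unfold r; nra|].
    intros. apply smoothing_local_lipschitz; auto. }
  destruct Hcur as [Hab [Hga [Hgb [HgK _]]]].
  assert (Hx : K x) by (rewrite <- Hga; apply HgK; lra).
  assert (Hy : K y) by (rewrite <- Hgb; apply HgK; lra).
  pose proof (smoothing_ge y Hy). pose proof (smoothing_le x Hx).
  assert (E : forall u, (1 - 2 * delta) * (Lc * u) = u) by (intros; unfold Lc; field; lra).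
  assert (Hmul : (1 - 2 * delta) * (phi y - phi x - 2 * C * scale n - Lc * side_n) <= (1 - 2 * delta) * (Lc * l))
    by (apply Rmult_le_compat_l; lra).
  rewrite Rmult_minus_distr_l, !E in Hmul. fold side_n. lra.
Qed.

End Scale.

Lemma length_ge_potential g a b l x y : is_curve K g a b x y -> is_length g a b l -> phi y - phi x <= l.
Proof.
  intros Hcur Hl. pose proof (is_length_ge0 g a b l (proj1 Hcur) Hl) as Hl0.
  apply Rnot_lt_le. intros Hlt. set (D := phi y - phi x) in *. set (gap := D - l).
  set (delta := Rmin (1 / 4) (gap / (8 * D))).
  assert (Hdel : 0 < delta <= 1 / 4).
  { split; [apply Rmin_pos; [lra|apply Rdiv_lt_0_compat; unfold gap; lra]|apply Rmin_l]. }
  assert (Hdel2 : 2 * delta * D <= gap / 4).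
  { apply Rle_trans with (2 * (gap / (8 * D)) * D); [apply Rmult_le_compat_r; [lra|]; apply Rmult_le_compat_l; [lra|apply Rmin_r]|].
    right; field; lra. }
  pose proof (side_pos P HE).
  destruct (scale_small (gap / 4) (2 * C + side P)) as [n0 Hn0]; [unfold gap; lra|lra|].
  set (n := Nat.max n0 m0).
  assert (Hhn : scale n <= scale n0) by (apply scale_anti; unfold n; lia).
  pose proof (scale_pos n).
  pose proof (length_ge_potential_approx n delta ltac:(unfold n; lia) Hdel g a b l x y Hcur Hl).
  assert (scale n * (2 * C + side P) < gap / 4)
    by (apply Rle_lt_trans with (scale n0 * (2 * C + side P)); auto; apply Rmult_le_compat_r; lra).
  fold D in H1. unfold gap in *.
  assert ((1 - 2 * delta) * (2 * C * scale n) <= 2 * C * scale n) by (assert (0 <= 2 * C * scale n) by nra; nra).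
  nra.
Qed.

End LowerBound.
End Smoothing.

(** * The level-m graph and a potential for the geodesic distance *)

Lemma exists_least (Q : nat -> Prop) : (exists n, Q n) -> exists n, Q n /\ forall m, Q m -> (n <= m)%nat.
Proof.
  intros [n Hn]. induction n as [n IH] using (well_founded_induction Wf_nat.lt_wf).
  destruct (classic (exists m, (m < n)%nat /\ Q m)) as [[m [Hm Qm]]|Hno]; [apply (IH m Hm Qm)|].
  exists n. split; auto. intros m Qm. destruct (Nat.le_gt_cases n m); auto. exfalso. eauto.
Qed.

Section Graph.

Variable P : idx -> pt.

Definition graph_edge (m : nat) (x y : pt) : Prop :=
  exists w i j, length w = m /\ i <> j /\ x = Fw P w (P i) /\ y = Fw P w (P j).

Inductive walk (m : nat) : pt -> pt -> nat -> Prop :=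
  | walk_nil x : walk m x x 0
  | walk_cons x y z n : graph_edge m x y -> walk m y z n -> walk m x z (S n).

Definition is_vertex (m : nat) (x : pt) := exists w i, length w = m /\ x = Fw P w (P i).

Lemma walk_app m x y z n1 n2 : walk m x y n1 -> walk m y z n2 -> walk m x z (n1 + n2).
Proof. induction 1; intros; simpl; auto. econstructor; eauto. Qed.

Lemma walk_rcons m x y z n : walk m x y n -> graph_edge m y z -> walk m x z (S n).
Proof.
  intros H He. replace (S n) with (n + 1)%nat by lia. apply walk_app with y; auto.
  econstructor; eauto. constructor.
Qed.

Lemma walk_rev m x y n : walk m x y n -> walk m y x n.
Proof.
  induction 1; [constructor|]. apply walk_rcons with y; auto.
  destruct H as [w [i [j [H1 [H2 [H3 H4]]]]]]. exists w, j, i. auto.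
Qed.

Lemma walk_Fmap m c x y n : walk m x y n -> walk (S m) (Fmap P c x) (Fmap P c y) n.
Proof.
  induction 1; [constructor|]. econstructor; eauto.
  destruct H as [w [i [j [H1 [H2 [H3 H4]]]]]]. exists (c :: w), i, j. simpl. subst. auto.
Qed.

(* Connectedness: from a corner of the cell c w, walk to p_c inside F_c, then along the
   edge of F_c from F_c(p_k) = F_k(p_c) to p_k inside F_k. *)
Lemma walk_to_vertex m : forall w i k, length w = m -> exists n, walk m (Fw P w (P i)) (P k) n.
Proof.
  induction m; intros w i k Hl.
  - destruct w; [|simpl in Hl; lia]. simpl. destruct (idx_eq_dec i k) as [->|Hik].
    + exists O. constructor.
    + exists 1%nat. econstructor; [|constructor]. exists nil, i, k. simpl. auto.
  - destruct w as [|c w']; simpl in Hl; [lia|]. injection Hl as Hl. simpl.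
    destruct (IHm w' i k Hl) as [n1 Hw1]. apply (walk_Fmap m c) in Hw1.
    destruct (idx_eq_dec c k) as [->|Hck]; [rewrite Fmap_fix in Hw1; eauto|].
    rewrite Fmap_swap in Hw1.
    destruct (IHm (repeat c m) c k (repeat_length c m)) as [n2 Hw2]. rewrite Fw_repeat_fix in Hw2.
    apply (walk_Fmap m k) in Hw2. rewrite Fmap_fix in Hw2.
    exists (n1 + n2)%nat. eapply walk_app; eauto.
Qed.

Lemma walk_vertices m w w' i j : length w = m -> length w' = m ->
  exists n, walk m (Fw P w (P i)) (Fw P w' (P j)) n.
Proof.
  intros H1 H2. destruct (walk_to_vertex m w i i1 H1) as [n1 W1]. destruct (walk_to_vertex m w' j i1 H2) as [n2 W2].
  exists (n1 + n2)%nat. eapply walk_app; eauto. apply walk_rev; auto.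
Qed.

Lemma walk_points m x y n : walk m x y n ->
  exists z : nat -> pt, z O = x /\ z n = y /\ forall k, (k < n)%nat -> graph_edge m (z k) (z (S k)).
Proof.
  induction 1 as [x|x y z n Hxy _ [z' [A [B C]]]]; [exists (fun _ => x); repeat split; auto; intros; lia|].
  exists (fun k => match k with O => x | S k' => z' k' end). split; [auto|split; [auto|]].
  intros [|k] Hk; [rewrite A; auto|apply C; lia].
Qed.

Definition graph_dist (m : nat) (p c : pt) : nat :=
  epsilon (inhabits O) (fun n => walk m p c n /\ forall n', walk m p c n' -> (n <= n')%nat).

Lemma graph_dist_spec m p c : (exists n, walk m p c n) ->
  walk m p c (graph_dist m p c) /\ forall n', walk m p c n' -> (graph_dist m p c <= n')%nat.
Proof. intros Hex. unfold graph_dist. apply epsilon_spec. apply exists_least; auto. Qed.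

Lemma graph_dist_refl m p : graph_dist m p p = O.
Proof.
  destruct (graph_dist_spec m p p) as [_ Hm]; [exists O; constructor|].
  specialize (Hm O (walk_nil m p)). lia.
Qed.

Lemma graph_dist_edge m p w i j : is_vertex m p -> length w = m ->
  (graph_dist m p (Fw P w (P j)) <= graph_dist m p (Fw P w (P i)) + 1)%nat.
Proof.
  intros [w0 [a0 [Hl0 ->]]] Hl.
  destruct (graph_dist_spec m (Fw P w0 (P a0)) (Fw P w (P i)) (walk_vertices m w0 w a0 i Hl0 Hl)) as [W _].
  destruct (graph_dist_spec m (Fw P w0 (P a0)) (Fw P w (P j)) (walk_vertices m w0 w a0 j Hl0 Hl)) as [_ Hmin].
  destruct (idx_eq_dec i j) as [->|Hij]; [lia|]. rewrite Nat.add_1_r.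
  apply Hmin. apply walk_rcons with (Fw P w (P i)); auto. exists w, i, j. auto.
Qed.

End Graph.

Section Potential.

Variable P : idx -> pt.
Hypothesis HE : equilateral P.
Variable K : pt -> Prop.
Hypothesis HC : compact_set K.
Hypothesis HK : exists x, K x.
Hypothesis HS : self_similar P K.

Variables (m : nat) (p : pt).
Hypothesis Hp : is_vertex P m p.

(* The length of the cheapest way from p to x through a corner c_k of the level-m cell w:
   walk along m-edges to c_k, then descend from c_k towards x along edges of smaller and
   smaller cells, which costs side * (bary k c_k - bary k x). *)
Definition corner_potential w k x :=
  scale m * side P * INR (graph_dist P m p (Fw P w (P k))) + side P * (bary P k (Fw P w (P k)) - bary P k x).

Definition cell_potential w x := Rmin3 (corner_potential w i1 x) (corner_potential w i2 x) (corner_potential w i3 x).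

Definition potential x := cell_potential (fst (address P K m x)) x.

Lemma cell_potential_corner w j : length w = m ->
  cell_potential w (Fw P w (P j)) = scale m * side P * INR (graph_dist P m p (Fw P w (P j))).
Proof.
  intros Hl. pose proof (side_pos P HE). pose proof (scale_pos m).
  assert (Tj : corner_potential w j (Fw P w (P j)) = scale m * side P * INR (graph_dist P m p (Fw P w (P j))))
    by (unfold corner_potential; ring).
  unfold cell_potential. rewrite <- Tj.
  apply (Rmin3_eq_of_le (fun i => corner_potential w i (Fw P w (P j)))). intros i. rewrite Tj.
  unfold corner_potential. rewrite !bary_corner, Hl by auto.
  destruct (idx_eq_dec i j) as [->|Hij]; [lra|].
  unfold kron. destruct (idx_eq_dec i i); [|congruence]. destruct (idx_eq_dec i j); [congruence|].
  pose proof (graph_dist_edge P m p w i j Hp Hl) as Hd. apply le_INR in Hd. rewrite plus_INR in Hd. simpl in Hd.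
  assert (scale m * side P * INR (graph_dist P m p (Fw P w (P j))) <=
          scale m * side P * (INR (graph_dist P m p (Fw P w (P i))) + 1)) by (apply Rmult_le_compat_l; nra).
  nra.
Qed.

Lemma cell_potential_lipschitz w x x' c : (forall k, Rabs (bary P k x - bary P k x') <= c) ->
  Rabs (cell_potential w x - cell_potential w x') <= side P * c.
Proof.
  intros Hc. pose proof (side_pos P HE).
  assert (Hk : forall k, Rabs (corner_potential w k x - corner_potential w k x') <= side P * c).
  { intros k. unfold corner_potential.
    replace (scale m * side P * INR (graph_dist P m p (Fw P w (P k))) + side P * (bary P k (Fw P w (P k)) - bary P k x) -
      (scale m * side P * INR (graph_dist P m p (Fw P w (P k))) + side P * (bary P k (Fw P w (P k)) - bary P k x')))
      with (side P * (bary P k x' - bary P k x)) by ring.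
    rewrite Rabs_mult, Rabs_pos_eq, Rabs_minus_sym by lra. apply Rmult_le_compat_l; [lra|auto]. }
  apply Rmin3_lipschitz; auto.
Qed.

(* The potential does not depend on the choice of address: by [two_cells] two cells
   containing a point have the same corners, or the point is their common corner. *)
Lemma potential_cell w y : length w = m -> K y -> potential (Fw P w y) = cell_potential w (Fw P w y).
Proof.
  intros Hl Hy. unfold potential.
  destruct (address_spec P K HS m (Fw P w y) (gasket_Fw P K HS w y Hy)) as [Hl1 [Hy1 E1]].
  set (w' := fst (address P K m (Fw P w y))) in *. set (y' := snd (address P K m (Fw P w y))) in *.
  destruct (two_cells P HE K HC HS w' w y' y Hy1 Hy ltac:(lia)) as [Heq|[[j [j' [Ev [Hv1 _]]]]|Hsep]];
    try rewrite <- E1 in *.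
  - unfold cell_potential, corner_potential. rewrite !Heq. reflexivity.
  - rewrite edist_xx in Hv1. assert (Ez : Fw P w y = Fw P w' (P j)).
    { apply edist_eq0. apply NNPP. intros Hne. apply (pow_nonzero _ 2) in Hne.
      pose proof (pow2_ge_0 (edist (Fw P w y) (Fw P w' (P j)))). lra. }
    rewrite Ez, cell_potential_corner, Ev, cell_potential_corner by lia. reflexivity.
  - rewrite edist_xx in Hsep. pose proof (scale_pos (length w')). pose proof (side_pos P HE).
    assert (0 < scale (length w') * side P) by nra. exfalso. nra.
Qed.

Lemma potential_deep w x : (m <= length w)%nat -> K x ->
  potential (Fw P w x) = cell_potential (firstn m w) (Fw P w x).
Proof.
  intros Hm Hx. rewrite <- (firstn_skipn m w) at 1 3. rewrite Fw_app.
  apply potential_cell; [rewrite length_firstn; lia|apply gasket_Fw; auto].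
Qed.

Lemma potential_corners w i j : (m <= length w)%nat ->
  Rabs (potential (Fw P w (P i)) - potential (Fw P w (P j))) <= scale (length w) * side P.
Proof.
  intros Hm. rewrite !potential_deep by (auto; apply gasket_vertex; auto).
  rewrite Rmult_comm. apply cell_potential_lipschitz. intros k. rewrite !bary_corner by auto.
  pose proof (scale_pos (length w)). unfold kron. repeat destruct (idx_eq_dec _ _); split_Rabs; lra.
Qed.

Lemma potential_cell_oscillation w z i : (m <= length w)%nat -> K z ->
  Rabs (potential (Fw P w z) - potential (Fw P w (P i))) <= side P * scale (length w).
Proof.
  intros Hm Hz. rewrite !potential_deep by (auto; apply gasket_vertex; auto).
  apply cell_potential_lipschitz. intros k. rewrite bary_Fw, bary_corner by auto.
  pose proof (scale_pos (length w)). pose proof (gasket_bary_ge0 P HE K HC HS z k Hz).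
  pose proof (gasket_bary_le1 P HE K HC HS z k Hz).
  assert (Rabs (bary P k z - kron k i) <= 1) by (unfold kron; destruct (idx_eq_dec k i); split_Rabs; lra).
  replace (scale (length w) * bary P k z + cell_offset k w - (scale (length w) * kron k i + cell_offset k w))
    with (scale (length w) * (bary P k z - kron k i)) by ring.
  rewrite Rabs_mult, Rabs_pos_eq by lra. nra.
Qed.

Lemma potential_start : potential p = 0.
Proof.
  pose proof Hp as [w0 [a0 [Hl0 Ep]]]. rewrite Ep at 1.
  rewrite potential_cell, cell_potential_corner, <- Ep, graph_dist_refl by (auto; apply gasket_vertex; auto).
  simpl. ring.
Qed.

Lemma potential_le_length g a b l q : is_curve K g a b p q -> is_length g a b l -> potential q <= l.
Proof.
  intros Hcur Hl. pose proof (side_pos P HE).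
  pose proof (length_ge_potential P HE K HC HS potential (side P) m ltac:(lra)
    potential_corners potential_cell_oscillation g a b l p q Hcur Hl). rewrite potential_start in H0. lra.
Qed.

End Potential.

(** * Geodesics from vertices *)

Section Descent.

Variable P : idx -> pt.
Variable K : pt -> Prop.
Hypothesis HS : self_similar P K.

Definition address_digit (y : pt) : idx * pt :=
  epsilon (inhabits (i1, y)) (fun iy => K (snd iy) /\ y = Fmap P (fst iy) (snd iy)).

Lemma address_digit_spec y : K y -> K (snd (address_digit y)) /\ y = Fmap P (fst (address_digit y)) (snd (address_digit y)).
Proof.
  intros Hy. unfold address_digit. apply epsilon_spec.
  apply HS in Hy. destruct Hy as [i [y' [A B]]]. exists (i, y'). auto.
Qed.

Fixpoint address_tail (y0 : pt) (t : nat) : pt :=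
  match t with O => y0 | S t' => snd (address_digit (address_tail y0 t')) end.

Fixpoint address_prefix (y0 : pt) (t : nat) : list idx :=
  match t with O => nil | S t' => address_prefix y0 t' ++ fst (address_digit (address_tail y0 t')) :: nil end.

Lemma address_prefix_length y0 t : length (address_prefix y0 t) = t.
Proof. induction t; simpl; auto. rewrite length_app, IHt. simpl. lia. Qed.

Lemma address_prefix_spec y0 t : K y0 -> K (address_tail y0 t) /\ y0 = Fw P (address_prefix y0 t) (address_tail y0 t).
Proof.
  intros Hy. induction t as [|t [A B]]; simpl; auto.
  destruct (address_digit_spec _ A) as [D E]. split; auto. rewrite Fw_app. simpl. rewrite <- E. auto.
Qed.

(* The corners p_i of the nested cells of y0; consecutive ones lie on one cell edge. *)
Definition descent (y0 : pt) (i : idx) (t : nat) : pt := Fw P (address_prefix y0 t) (P i).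

Lemma descent_step y0 i t : exists d,
  descent y0 i t = Fw P (address_prefix y0 t ++ i :: nil) (P i) /\
  descent y0 i (S t) = Fw P (address_prefix y0 t ++ i :: nil) (P d).
Proof.
  exists (fst (address_digit (address_tail y0 t))). unfold descent. simpl. rewrite !Fw_app. simpl.
  rewrite Fmap_fix, Fmap_swap. auto.
Qed.

End Descent.

Section Geodesic.

Variable P : idx -> pt.
Hypothesis HE : equilateral P.
Variable K : pt -> Prop.
Hypothesis HC : compact_set K.
Hypothesis HK : exists x, K x.
Hypothesis HS : self_similar P K.

Variables (m : nat) (p q : pt).
Hypothesis Hp : is_vertex P m p.
Hypothesis Hq : K q.

(* The path: a shortest walk in the level-m graph from p to the corner c = F_wq(p_i) of a
   level-m cell of q minimizing the potential, followed by the descent from c to q. *)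
Variables (wq : list idx) (yq : pt) (i : idx) (N : nat) (zw : nat -> pt).
Hypothesis Hwq : length wq = m.
Hypothesis Hyq : K yq.
Hypothesis Eq : q = Fw P wq yq.
Hypothesis Hi : potential P K m p q = corner_potential P m p wq i q.
Hypothesis HN : N = graph_dist P m p (Fw P wq (P i)).
Hypothesis Hz0 : zw O = p.
Hypothesis HzN : zw N = Fw P wq (P i).
Hypothesis Hzw : forall k, (k < N)%nat -> graph_edge P m (zw k) (zw (S k)).

Definition descent_path (k : nat) : pt := if Nat.leb k N then zw k else Fw P wq (descent P K yq i (k - N)).

Let c := Fw P wq (P i).
Let u := scale m * side P.

Lemma descent_path_walk k : (k <= N)%nat -> descent_path k = zw k.
Proof. intros Hk. unfold descent_path. apply Nat.leb_le in Hk. rewrite Hk. auto. Qed.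

Lemma descent_path_tail t : descent_path (N + t)%nat = Fw P wq (descent P K yq i t).
Proof.
  unfold descent_path. destruct (Nat.leb (N + t) N) eqn:E.
  - apply Nat.leb_le in E. replace t with O by lia. rewrite Nat.add_0_r, HzN. reflexivity.
  - do 3 f_equal. lia.
Qed.

Lemma descent_path_start : descent_path O = p.
Proof. rewrite descent_path_walk by lia. auto. Qed.

Lemma descent_path_step k : exists v a b, descent_path k = Fw P v (P a) /\ descent_path (S k) = Fw P v (P b) /\
  ((k < N)%nat /\ length v = m \/ (N <= k)%nat /\ a = i).
Proof.
  destruct (Nat.lt_ge_cases k N) as [Hk|Hk].
  - destruct (Hzw k Hk) as [v [a [b [Hv [Hab [E1 E2]]]]]]. exists v, a, b.
    rewrite !descent_path_walk by lia. auto.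
  - destruct (descent_step P K yq i (k - N)) as [d [A B]].
    exists (wq ++ address_prefix P K yq (k - N) ++ i :: nil), i, d.
    replace k with (N + (k - N))%nat at 1 by lia. replace (S k) with (N + S (k - N))%nat by lia.
    rewrite !descent_path_tail, A, B, <- !Fw_app. auto.
Qed.

Lemma descent_path_segment_in_gasket k t : 0 <= t <= 1 -> K (seg (descent_path k) (descent_path (S k)) t).
Proof.
  intros Ht. destruct (descent_path_step k) as [v [a [b [E1 [E2 _]]]]]. rewrite E1, E2.
  apply gasket_cell_seg; auto.
Qed.

Lemma link_descent_path_walk k : (k < N)%nat -> link descent_path k = u.
Proof.
  intros Hk. destruct (Hzw k Hk) as [v [a [b [Hv [Hab [E1 E2]]]]]]. unfold link.
  rewrite !descent_path_walk, E1, E2, edist_corners, Hv by (auto; lia). reflexivity.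
Qed.

Lemma link_descent_path_tail k : (N <= k)%nat -> link descent_path k = side P * (bary P i (descent_path k) - bary P i (descent_path (S k))).
Proof.
  intros Hk. destruct (descent_path_step k) as [v [a [b [E1 [E2 [[Hk' _]|[_ ->]]]]]]]; [lia|].
  unfold link. rewrite E1, E2, !bary_corner by auto. destruct (idx_eq_dec i b) as [<-|Hib].
  - rewrite edist_xx. ring.
  - rewrite edist_corners by auto. unfold kron.
    destruct (idx_eq_dec i i); [|congruence]. destruct (idx_eq_dec i b); [congruence|]. ring.
Qed.

Lemma vtime_descent_path_walk k : (k <= N)%nat -> vtime descent_path k = INR k * u.
Proof.
  induction k; intros Hk; [unfold vtime; simpl; ring|].
  rewrite vtime_S, IHk, link_descent_path_walk, S_INR by lia. ring.
Qed.

Lemma vtime_descent_path_tail t :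
  vtime descent_path (N + t) = INR N * u + side P * (bary P i c - bary P i (descent_path (N + t)%nat)).
Proof.
  induction t.
  - rewrite Nat.add_0_r, vtime_descent_path_walk, descent_path_walk, HzN by lia. fold c. ring.
  - replace (N + S t)%nat with (S (N + t)) by lia. rewrite vtime_S, IHt, link_descent_path_tail by lia. ring.
Qed.

Lemma descent_gap t : bary P i (descent_path (N + t)%nat) - bary P i q = scale (m + t) * (1 - bary P i (address_tail P K yq t)).
Proof.
  destruct (address_prefix_spec P K HS yq t Hyq) as [_ Ey].
  rewrite descent_path_tail, Eq. rewrite Ey at 2. unfold descent. rewrite <- !Fw_app, !bary_Fw, bary_vertex by auto.
  rewrite length_app, Hwq, address_prefix_length. unfold kron. destruct (idx_eq_dec i i); [|congruence]. ring.
Qed.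

Lemma descent_gap_bounds t : 0 <= bary P i (descent_path (N + t)%nat) - bary P i q <= scale (m + t).
Proof.
  rewrite descent_gap. destruct (address_prefix_spec P K HS yq t Hyq) as [HY _].
  pose proof (gasket_bary_ge0 P HE K HC HS _ i HY). pose proof (gasket_bary_le1 P HE K HC HS _ i HY).
  pose proof (scale_pos (m + t)). split; nra.
Qed.

Lemma potential_eq : potential P K m p q = INR N * u + side P * (bary P i c - bary P i q).
Proof. rewrite Hi, HN. unfold corner_potential. fold c u. ring. Qed.

Lemma vtime_descent_path_bound k : vtime descent_path k <= potential P K m p q.
Proof.
  rewrite potential_eq. pose proof (side_pos P HE). destruct (Nat.le_gt_cases k N) as [Hk|Hk].
  - rewrite vtime_descent_path_walk by auto. pose proof (descent_gap_bounds O) as Hg.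
    rewrite Nat.add_0_r, descent_path_walk, HzN in Hg by lia. fold c in Hg.
    assert (INR k * u <= INR N * u) by (apply Rmult_le_compat_r; [unfold u; left; apply Rmult_lt_0_compat; [apply scale_pos|lra]|apply le_INR; auto]).
    nra.
  - replace k with (N + (k - N))%nat by lia. rewrite vtime_descent_path_tail. pose proof (descent_gap_bounds (k - N)). nra.
Qed.

Lemma vtime_descent_path_sup e : 0 < e -> exists M, potential P K m p q - vtime descent_path M < e.
Proof.
  intros He. pose proof (side_pos P HE). destruct (scale_small e (side P) He ltac:(lra)) as [t Ht].
  exists (N + t)%nat. rewrite potential_eq, vtime_descent_path_tail. pose proof (descent_gap_bounds t).
  pose proof (scale_anti t (m + t) ltac:(lia)). nra.
Qed.

Lemma descent_path_converges : converges_to descent_path q.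
Proof.
  intros e He. pose proof (side_pos P HE). destruct (scale_small e (2 * side P) He ltac:(lra)) as [t0 Ht0].
  exists (N + t0)%nat. intros k Hk. replace k with (N + (k - N))%nat by lia. set (t := (k - N)%nat).
  destruct (address_prefix_spec P K HS yq t Hyq) as [HY Ey].
  rewrite descent_path_tail, Eq. rewrite Ey at 2. unfold descent. rewrite <- !Fw_app, edist_Fw, length_app, Hwq, address_prefix_length.
  assert (edist (P i) (address_tail P K yq t) <= 2 * side P).
  { pose proof (edist_triangle (P i) (P i1) (address_tail P K yq t)). rewrite (edist_sym (P i1)) in H0.
    pose proof (gasket_edist_vertex P HE K HC HS _ i1 HY).
    assert (edist (P i) (P i1) <= side P) by (destruct (idx_eq_dec i i1) as [->|]; [rewrite edist_xx; lra|rewrite edist_vertices; auto; lra]).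
    lra. }
  pose proof (scale_anti t0 (m + t) ltac:(unfold t; lia)). pose proof (scale_pos (m + t)).
  pose proof (edist_ge0 (P i) (address_tail P K yq t)).
  apply Rle_lt_trans with (scale t0 * (2 * side P)); auto.
  apply Rle_trans with (scale (m + t) * (2 * side P)); [apply Rmult_le_compat_l|apply Rmult_le_compat_r]; lra.
Qed.

Lemma descent_path_min_geodesic : min_geodesic K (polyline descent_path q) 0 (potential P K m p q) p q.
Proof.
  split.
  - pose proof (polyline_is_curve descent_path q _ descent_path_converges vtime_descent_path_bound vtime_descent_path_sup K Hq
      descent_path_segment_in_gasket) as Hcur.
    rewrite descent_path_start in Hcur. exact Hcur.
  - exists (potential P K m p q). split.
    + apply polyline_is_length; auto using descent_path_converges, vtime_descent_path_bound, vtime_descent_path_sup.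
    + intros g' a' b' l' Hc' Hl'. apply (potential_le_length P HE K HC HK HS m p Hp g' a' b' l' q Hc' Hl').
Qed.

End Geodesic.

Lemma vertex_geodesic P K m p q : equilateral P -> compact_set K -> (exists x, K x) -> self_similar P K ->
  is_vertex P m p -> K q ->
  exists (Z : nat -> pt) (L : R),
    converges_to Z q /\ (forall k, vtime Z k <= L) /\ (forall e, 0 < e -> exists M, L - vtime Z M < e) /\
    min_geodesic K (polyline Z q) 0 L p q /\
    forall k, exists v a b, Z k = Fw P v (P a) /\ Z (S k) = Fw P v (P b).
Proof.
  intros HE HC HK HS Hp Hq.
  destruct (address_spec P K HS m q Hq) as [Hwq [Hyq Eq]].
  set (wq := fst (address P K m q)) in *. set (yq := snd (address P K m q)) in *.
  destruct (Rmin3_attained (fun k => corner_potential P m p wq k q)) as [i Hi].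
  assert (Hpot : potential P K m p q = corner_potential P m p wq i q) by exact Hi.
  set (N := graph_dist P m p (Fw P wq (P i))).
  destruct (graph_dist_spec P m p (Fw P wq (P i))) as [Hwalk _].
  { destruct Hp as [w0 [a0 [Hl0 ->]]]. apply walk_vertices; auto. }
  destruct (walk_points P m _ _ _ Hwalk) as [zw [Hz0 [HzN Hzw]]]. fold N in HzN, Hzw.
  exists (descent_path P K wq yq i N zw), (potential P K m p q).
  split; [|split; [|split; [|split]]].
  - eapply descent_path_converges; eauto.
  - intros k. eapply vtime_descent_path_bound; eauto.
  - intros e He. eapply vtime_descent_path_sup; eauto.
  - eapply descent_path_min_geodesic; eauto.
  - intros k. edestruct (descent_path_step P K m p wq yq i N zw) as [v [a [b [E1 [E2 _]]]]]; eauto.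
Qed.

Section Enumeration.

Variable P : idx -> pt.
Hypothesis HE : equilateral P.
Variable K : pt -> Prop.
Hypothesis HC : compact_set K.
Hypothesis HK : exists x, K x.
Hypothesis HS : self_similar P K.

Variable Rc : nat -> pt -> Prop.
Variables (W : nat -> list idx) (A B : nat -> idx).
Hypothesis HW : forall j, idx_lt (A j) (B j) /\ set_eq (Rc j) (cell_edge P (W j) (A j) (B j)).
Hypothesis Hcomplete : forall w a b, idx_lt a b -> exists! j, set_eq (Rc j) (cell_edge P w a b).

Definition edge_len j := edge_length P (W j) (A j) (B j).
Definition edge_curve j := arc (Fw P (W j) (P (A j))) (Fw P (W j) (P (B j))).

Lemma edge_len_eq j : edge_len j = scale (length (W j)) * side P.
Proof. apply edge_length_eq; auto. apply idx_lt_neq, HW. Qed.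

Lemma edge_len_pos j : 0 < edge_len j.
Proof. rewrite edge_len_eq. pose proof (scale_pos (length (W j))). pose proof (side_pos P HE). nra. Qed.

Lemma edge_ends_neq j : Fw P (W j) (P (A j)) <> Fw P (W j) (P (B j)).
Proof. intros E. pose proof (edge_len_pos j). unfold edge_len, edge_length in H. rewrite E, edist_xx in H. lra. Qed.

Lemma Rc_segment j : set_eq (Rc j) (segment (Fw P (W j) (P (A j))) (Fw P (W j) (P (B j)))).
Proof. intros x. rewrite (proj2 (HW j) x). apply cell_edge_segment. Qed.

Lemma axiom1_edge j :
  inj_on (edge_curve j) (edge_len j) /\ C1_arclength (edge_curve j) (edge_len j) /\
  set_eq (Rc j) (image_on (edge_curve j) 0 (edge_len j)) /\
  (forall t, 0 <= t <= edge_len j -> K (edge_curve j t)) /\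
  is_length (edge_curve j) 0 (edge_len j) (edge_len j).
Proof.
  pose proof (edge_ends_neq j) as Hne. unfold edge_curve, edge_len, edge_length.
  split; [|split; [|split; [|split]]].
  - apply arc_inj; auto.
  - apply arc_C1; auto.
  - intros x. rewrite (Rc_segment j x). apply arc_image; auto.
  - intros t Ht. apply (gasket_cell_edge P K HC HK HS (W j) (A j) (B j)).
    apply cell_edge_segment, arc_image; auto. exists t. auto.
  - apply arc_length; auto.
Qed.

Lemma vertices_dense x : K x -> closure (fun z => exists w a, z = Fw P w (P a)) x.
Proof.
  intros Hx e He. pose proof (side_pos P HE). destruct (scale_small e (side P) He ltac:(lra)) as [n Hn].
  destruct (gasket_near_corner P HE K HC HS x n Hx) as [w [Hl Hd]]. exists (Fw P w (P i1)). split; eauto. lra.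
Qed.

Lemma corner_on_edge w : exists j, Rc j (Fw P w (P i1)).
Proof.
  destruct (Hcomplete w i1 i2 I) as [j [Hj _]]. exists j. apply Hj, cell_edge_segment.
  exists 0. split; [lra|]. symmetry. apply seg0.
Qed.

Lemma gasket_closure_edges : set_eq K (closure (fun x => exists j, Rc j x)).
Proof.
  intros x. split.
  - intros Hx e He. pose proof (side_pos P HE). destruct (scale_small e (side P) He ltac:(lra)) as [n Hn].
    destruct (gasket_near_corner P HE K HC HS x n Hx) as [w [_ Hd]].
    exists (Fw P w (P i1)). split; [apply corner_on_edge|lra].
  - intros Hx. apply compact_set_closed; auto. intros e He. destruct (Hx e He) as [y [[j Hj] Hd]].
    exists y. split; auto. apply (gasket_cell_edge P K HC HK HS (W j) (A j) (B j)). apply HW; auto.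
Qed.

Lemma polyline_link_traverses Z q k v a b : converges_to Z q -> 0 < link Z k ->
  Z k = Fw P v (P a) -> Z (S k) = Fw P v (P b) ->
  exists J, traverses Rc edge_len edge_curve (polyline Z q) (vtime Z k) (vtime Z (S k)) J.
Proof.
  intros Hc Hl Ek ESk. pose proof (link_pos_neq Z k Hl) as Hne.
  assert (Hab : a <> b) by (intros <-; congruence).
  assert (Hseg : exists c d, idx_lt c d /\
    set_eq (segment (Fw P v (P c)) (Fw P v (P d))) (segment (Z k) (Z (S k)))).
  { rewrite Ek, ESk. destruct (idx_lt_total a b Hab) as [Hlt|Hlt]; [exists a, b|exists b, a]; split; auto.
    - intros x; tauto.
    - intros x. apply segment_sym. }
  destruct Hseg as [c [d [Hlt Hs]]]. destruct (Hcomplete v c d Hlt) as [J [HJ _]]. exists J.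
  assert (HR : set_eq (Rc J) (segment (Z k) (Z (S k)))) by (intros x; rewrite (HJ x), cell_edge_segment; apply Hs).
  split.
  - intros x. rewrite (HR x). apply polyline_link_image; auto.
  - pose proof (edge_ends_neq J) as HneJ.
    assert (Hs2 : set_eq (segment (Fw P (W J) (P (A J))) (Fw P (W J) (P (B J)))) (segment (Z k) (Z (S k))))
      by (intros x; rewrite <- (Rc_segment J x); apply HR).
    unfold edge_curve, edge_len, edge_length. rewrite arc_start, arc_end, !polyline_vtime by auto.
    destruct (segment_endpoints _ _ _ _ HneJ Hs2) as [[E1 E2]|[E1 E2]]; [left|right]; split; congruence.
Qed.

Lemma axiom2 : Axiom2 K Rc edge_len edge_curve.
Proof.
  exists (fun x => exists w a, x = Fw P w (P a)). split; [|split].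
  - intros x [w [a ->]]. apply gasket_corner; auto.
  - apply vertices_dense.
  - intros p q [w [a Ep]] Hq.
    destruct (vertex_geodesic P K (length w) p q HE HC HK HS ltac:(exists w, a; auto) Hq)
      as [Z [L [Hc [Hb [Hsup [Hgeo Hcell]]]]]].
    exists (polyline Z q), 0, L. split; auto.
    apply concat_of_polyline; auto. intros k Hl. destruct (Hcell k) as [v [a' [b' [E1 E2]]]].
    eapply polyline_link_traverses; eauto.
Qed.

Hypothesis Hsorted : forall j w a b w' a' b',
  set_eq (Rc j) (cell_edge P w a b) -> set_eq (Rc (S j)) (cell_edge P w' a' b') ->
  edge_length P w' a' b' <= edge_length P w a b.

(* Edge lengths decrease and the edge of length 2^-n * side of the cell 1^n occurs
   somewhere in the enumeration. *)
Lemma edge_len_cv : Un_cv edge_len 0.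
Proof.
  intros e He. assert (Hmon : forall j, edge_len (S j) <= edge_len j) by (intros j; apply (Hsorted j); apply HW).
  pose proof (side_pos P HE). destruct (scale_small e (side P) He ltac:(lra)) as [n Hn].
  destruct (Hcomplete (repeat i1 n) i1 i2 I) as [j0 [Hj0 _]].
  assert (Ha : edge_len (S j0) <= scale n * side P).
  { rewrite <- (repeat_length i1 n), <- (edge_length_eq P HE (repeat i1 n) i1 i2) by discriminate.
    apply (Hsorted j0); auto. apply HW. }
  exists (S j0). intros k Hk. unfold Rdist. rewrite Rminus_0_r.
  assert (edge_len k <= edge_len (S j0)) by (induction Hk; [lra|pose proof (Hmon m); lra]).
  pose proof (edge_len_pos k). rewrite Rabs_pos_eq by lra. lra.
Qed.

Lemma axiom1 : Axiom1 K Rc edge_len edge_curve.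
Proof. split; [exact axiom1_edge|split; [exact gasket_closure_edges|exact edge_len_cv]]. Qed.

End Enumeration.

Theorem proposition2 (P : idx -> pt) (K : pt -> Prop) (Rc : nat -> pt -> Prop) :
  equilateral P ->
  compact_set K -> (exists x, K x) -> self_similar P K ->
  (forall j, exists w a b, idx_lt a b /\ set_eq (Rc j) (cell_edge P w a b)) ->
  (forall w a b, idx_lt a b -> exists! j, set_eq (Rc j) (cell_edge P w a b)) ->
  (forall j w a b w' a' b',
     set_eq (Rc j) (cell_edge P w a b) ->
     set_eq (Rc (S j)) (cell_edge P w' a' b') ->
     edge_length P w' a' b' <= edge_length P w a b) ->
  exists (alpha : nat -> R) (r : nat -> R -> pt),
    Axiom1 K Rc alpha r /\ Axiom2 K Rc alpha r.
Proof.
  intros HE HC HK HS Henum Hcomplete Hsorted.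
  destruct (choice (fun j (e : list idx * idx * idx) =>
    idx_lt (snd (fst e)) (snd e) /\ set_eq (Rc j) (cell_edge P (fst (fst e)) (snd (fst e)) (snd e)))) as [E HEdge].
  { intros j. destruct (Henum j) as [w [a [b H]]]. exists (w, a, b). exact H. }
  set (W := fun j => fst (fst (E j))). set (A := fun j => snd (fst (E j))). set (B := fun j => snd (E j)).
  exists (edge_len P W A B), (edge_curve P W A B). split.
  - apply axiom1; auto.
  - apply axiom2; auto.
Qed.
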